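(* For any $\lambda\in K\setminus\{0,1\}$, the spherical algebra $S(\lambda)$ is isomorphic to the trivial extension algebra $\mathrm{T}(C(\lambda))=C(\lambda)\ltimes D(C(\lambda))$ of $C(\lambda)$, where $D=\mathrm{Hom}_K(-,K)$.
   Context: $K$ is an algebraically closed field; paths composed left to right. For a triangulation quiver $(Q,f)$ (finite connected quiver, $\ge2$ vertices, exactly two arrows start and two end at each vertex, $f$ a permutation of arrows with $s(f(\alpha))=t(\alpha)$, $f^3=\mathrm{id}$), $\bar\alpha$ is the other arrow with source $s(\alpha)$, $g(\alpha)=\overline{f(\alpha)}$, $n_\alpha$ the $g$-orbit length; with weights $m_\alpha$ and parameters $c_\alpha\in K^*$ constant on $g$-orbits, $A_\alpha=\alpha g(\alpha)\cdots g^{m_\alpha n_\alpha-2}(\alpha)$; $\alpha$ virtual if $m_\alpha n_\alpha=2$. The weighted surface algebra is $KQ/I$, $I$ generated by $\alpha f(\alpha)-c_{\bar\alpha}A_{\bar\alpha}$ (all $\alpha$), $\alpha f(\alpha)g(f(\alpha))$ ($f^2(\alpha)$ not virtual), $\alpha g(\alpha)f(g(\alpha))$ ($f(\alpha)$ not virtual). $S(\lambda)$: vertices $1,\dots,6$; arrows $\alpha:1\to2,\beta:2\to3,\gamma:3\to4,\sigma:4\to1,\varrho:1\to6,\omega:6\to3,\nu:3\to5,\delta:5\to1,\xi:2\to5,\eta:5\to2,\mu:4\to6,\varepsilon:6\to4$; $f=(\alpha\,\xi\,\delta)(\beta\,\nu\,\eta)(\gamma\,\mu\,\omega)(\varrho\,\varepsilon\,\sigma)$;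 all weights $1$; parameter $\lambda$ on the $g$-orbit $(\alpha\,\beta\,\gamma\,\sigma)$ and $1$ on the other $g$-orbits $(\varrho\,\omega\,\nu\,\delta),(\xi\,\eta),(\mu\,\varepsilon)$. $C(\lambda)$ is the bound quiver algebra given by the quiver with vertices $1,\dots,6$ and arrows $\alpha:1\to2$, $\beta:2\to3$, $\varrho:1\to6$, $\omega:6\to3$, $\delta:5\to1$, $\sigma:4\to1$, with relations $\delta\alpha\beta=\delta\varrho\omega$ and $\sigma\varrho\omega=\lambda\sigma\alpha\beta$. *)

From HB Require Import structures.
From mathcomp Require Import all_boot all_order all_algebra.

Set Implicit Arguments.
Unset Strict Implicit.
Unset Printing Implicit Defensive.

Import GRing.Theory.
Local Open Scope ring_scope.

(* Generic bound quiver algebras KQ/I, with paths composed left to right.     *)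
Section Quiver.
Variables (K : fieldType) (V A : finType) (s t : A -> V).

(* A path is a starting vertex together with a (possibly empty) sequence of  *)
(* arrows; the empty sequence is the stationary path e_v.                    *)
Definition qpath := (V * seq A)%type.

Definition is_qpath (p : qpath) : bool :=
  match p.2 with
  | [::] => true
  | a :: p' => (s a == p.1) && path (fun a b => t a == s b) a p'
  end.

Definition psrc (p : qpath) : V := p.1.
Definition ptgt (p : qpath) : V := last p.1 (map t p.2).

(* Elements of the path algebra KQ as formal K-linear combinations of paths. *)
Definition kq := seq (K * qpath).
Definition kq_valid (f : kq) : bool := all (fun z => is_qpath z.2) f.
Definition kcoef (f : kq) (q : qpath) : K := \sum_(z <- f | z.2 == q) z.1.
Definition kpath (p : qpath) : kq := [:: (1, p)].
Definition kscale (c : K) (f : kq) : kq := [seq (c * z.1, z.2) | z <- f].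
Definition kmul (f g : kq) : kq :=
  flatten [seq [seq (z.1 * w.1, (z.2.1, z.2.2 ++ w.2.2)) | w <- g & ptgt z.2 == psrc w.2]
          | z <- f].

(* h lies in the two-sided ideal of KQ generated by the relations R, i.e.  *)
(* h is a K-linear combination of elements u * r * w, u, w paths, r in R.  *)
Definition in_ideal (R : seq kq) (h : kq) : Prop :=
  exists l : seq (K * qpath * kq * qpath),
    all (fun z => [&& is_qpath z.1.1.2, z.1.2 \in R & is_qpath z.2]) l /\
    forall q, kcoef h q =
      kcoef (flatten [seq kscale z.1.1.1 (kmul (kmul (kpath z.1.1.2) z.1.2) (kpath z.2))
                     | z <- l]) q.

Section Eval.
Variables (B : algType K) (e : V -> B) (x : A -> B).

Definition peval (p : qpath) : B :=
  if p.2 is [::] then e p.1 else \prod_(a <- p.2) x a.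

Definition keval (f : kq) : B := \sum_(z <- f) z.1 *: peval z.2.
End Eval.

(* B is isomorphic to KQ/I where I is the ideal generated by R: there is a   *)
(* surjective K-algebra homomorphism KQ -> B (determined by the images e_v   *)
(* of the stationary paths and x_a of the arrows) whose kernel is I.         *)
Definition presents (R : seq kq) (B : algType K) : Prop :=
  exists (e : V -> B) (x : A -> B),
    [/\ forall v w, e v * e w = (if v == w then e v else 0),
        \sum_(v : V) e v = 1,
        forall a, x a = e (s a) * x a * e (t a),
        (forall b : B, exists f, kq_valid f /\ keval e x f = b) &
        forall f, kq_valid f -> (keval e x f = 0 <-> in_ideal R f)].

(* Weighted surface algebra relations for (Q, f), weights m, parameters c. *)
Section WSA.
Variables (f : A -> A) (m : A -> nat) (c : A -> K).

Definition bar (a : A) : A := odflt a [pick b | (s b == s a) && (b != a)].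
Definition gperm (a : A) : A := bar (f a).
Definition norb (a : A) : nat := order gperm a.
Definition virtual (a : A) : bool := m a * norb a == 2.
Definition Apath (a : A) : qpath :=
  (s a, [seq iter k gperm a | k <- iota 0 (m a * norb a).-1]).

Definition wsa_rels : seq kq :=
  flatten [seq
    [:: (1, (s a, [:: a; f a])) :: kscale (- c (bar a)) (kpath (Apath (bar a)))] ++
    (if virtual (f (f a)) then [::] else [:: kpath (s a, [:: a; f a; gperm (f a)])]) ++
    (if virtual (f a) then [::] else [:: kpath (s a, [:: a; gperm a; f (gperm a)])])
  | a <- enum A].
End WSA.
End Quiver.

(* Elements are pairs (c, h) with h : C -> K K-linear; multiplication         *)
(* (a, f)(b, g) = (ab, a g + f b), where (a g)(u) = g(u a), (f b)(u) = f(b u).*)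
Section TrivExt.
Variable K : fieldType.

Definition lin_functional (C : algType K) (h : C -> K) : Prop :=
  forall (k : K) (u v : C), h (k *: u + v) = k * h u + h v.

Definition te_mul (C : algType K) (p q : C * (C -> K)) : C * (C -> K) :=
  (p.1 * q.1, (fun u => q.2 (u * p.1) + p.2 (q.1 * u))).

Definition iso_trivial_ext (S C : algType K) : Prop :=
  exists phi : S -> C * (C -> K),
    [/\ (forall (k : K) (u v : S),
          phi (k *: u + v) =
          (k *: (phi u).1 + (phi v).1, (fun w => k * (phi u).2 w + (phi v).2 w))),
        injective phi /\ (forall u, lin_functional (phi u).2),
        (forall p : C * (C -> K), lin_functional p.2 -> exists u, phi u = p),
        phi 1 = (1, (fun _ => 0)) &
        forall u v, phi (u * v) = te_mul (phi u) (phi v)].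
End TrivExt.

Inductive vtx := v1 | v2 | v3 | v4 | v5 | v6.

Definition vtx_code (v : vtx) : 'I_6 :=
  inord (match v with v1 => 0 | v2 => 1 | v3 => 2 | v4 => 3 | v5 => 4 | v6 => 5 end)%N.
Definition vtx_decode (i : 'I_6) : option vtx :=
  match nat_of_ord i with 0 => Some v1 | 1 => Some v2 | 2 => Some v3 | 3 => Some v4
  | 4 => Some v5 | 5 => Some v6 | _ => None end%N.
Lemma vtx_codeK : pcancel vtx_code vtx_decode.
Proof. by case; rewrite /vtx_decode /vtx_code /= inordK. Qed.
HB.instance Definition _ := Finite.copy vtx (pcan_type vtx_codeK).

Inductive sarr := s_alpha | s_beta | s_gamma | s_sigma | s_rho | s_omega
                | s_nu | s_delta | s_xi | s_eta | s_mu | s_eps.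

Definition sarr_code (a : sarr) : 'I_12 :=
  inord (match a with s_alpha => 0 | s_beta => 1 | s_gamma => 2 | s_sigma => 3
  | s_rho => 4 | s_omega => 5 | s_nu => 6 | s_delta => 7 | s_xi => 8 | s_eta => 9
  | s_mu => 10 | s_eps => 11 end)%N.
Definition sarr_decode (i : 'I_12) : option sarr :=
  match nat_of_ord i with 0 => Some s_alpha | 1 => Some s_beta | 2 => Some s_gamma
  | 3 => Some s_sigma | 4 => Some s_rho | 5 => Some s_omega | 6 => Some s_nu
  | 7 => Some s_delta | 8 => Some s_xi | 9 => Some s_eta | 10 => Some s_mu
  | 11 => Some s_eps | _ => None end%N.
Lemma sarr_codeK : pcancel sarr_code sarr_decode.
Proof. by case; rewrite /sarr_decode /sarr_code /= inordK. Qed.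
HB.instance Definition _ := Finite.copy sarr (pcan_type sarr_codeK).

Definition S_src (a : sarr) : vtx :=
  match a with s_alpha => v1 | s_beta => v2 | s_gamma => v3 | s_sigma => v4
  | s_rho => v1 | s_omega => v6 | s_nu => v3 | s_delta => v5 | s_xi => v2
  | s_eta => v5 | s_mu => v4 | s_eps => v6 end.
Definition S_tgt (a : sarr) : vtx :=
  match a with s_alpha => v2 | s_beta => v3 | s_gamma => v4 | s_sigma => v1
  | s_rho => v6 | s_omega => v3 | s_nu => v5 | s_delta => v1 | s_xi => v5
  | s_eta => v2 | s_mu => v6 | s_eps => v4 end.
Definition S_f (a : sarr) : sarr :=
  match a with s_alpha => s_xi | s_xi => s_delta | s_delta => s_alpha
  | s_beta => s_nu | s_nu => s_eta | s_eta => s_beta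
  | s_gamma => s_mu | s_mu => s_omega | s_omega => s_gamma
  | s_rho => s_eps | s_eps => s_sigma | s_sigma => s_rho end.
Definition S_weight (a : sarr) : nat := 1.
Definition S_param (K : fieldType) (lam : K) (a : sarr) : K :=
  match a with s_alpha | s_beta | s_gamma | s_sigma => lam | _ => 1 end.


Definition S_rels (K : fieldType) (lam : K) : seq (kq K vtx sarr) :=
  wsa_rels S_src S_f S_weight (S_param lam).

Inductive carr := c_alpha | c_beta | c_rho | c_omega | c_delta | c_sigma.

Definition carr_code (a : carr) : 'I_6 :=
  inord (match a with c_alpha => 0 | c_beta => 1 | c_rho => 2 | c_omega => 3
  | c_delta => 4 | c_sigma => 5 end)%N.
Definition carr_decode (i : 'I_6) : option carr :=
  match nat_of_ord i with 0 => Some c_alpha | 1 => Some c_beta | 2 => Some c_rho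
  | 3 => Some c_omega | 4 => Some c_delta | 5 => Some c_sigma | _ => None end%N.
Lemma carr_codeK : pcancel carr_code carr_decode.
Proof. by case; rewrite /carr_decode /carr_code /= inordK. Qed.
HB.instance Definition _ := Finite.copy carr (pcan_type carr_codeK).

Definition C_src (a : carr) : vtx :=
  match a with c_alpha => v1 | c_beta => v2 | c_rho => v1 | c_omega => v6
  | c_delta => v5 | c_sigma => v4 end.
Definition C_tgt (a : carr) : vtx :=
  match a with c_alpha => v2 | c_beta => v3 | c_rho => v6 | c_omega => v3
  | c_delta => v1 | c_sigma => v1 end.

Definition C_rels (K : fieldType) (lam : K) : seq (kq K vtx carr) :=
  [:: [:: (1, (v5, [:: c_delta; c_alpha; c_beta])); (-1, (v5, [:: c_delta; c_rho; c_omega]))];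
      [:: (1, (v4, [:: c_sigma; c_rho; c_omega])); (- lam, (v4, [:: c_sigma; c_alpha; c_beta]))]].

(* The isomorphism S(λ) ≅ T(C(λ)) is given explicitly.  By the universal
   property of the presentation of S(λ) it suffices to name elements of
   T(C) = C ⋉ D(C) satisfying the relations of S(λ): the six arrows shared
   with C(λ) go to themselves, γ and ν to the duals of the maximal paths σαβ
   and δαβ of C(λ) (the latter scaled by λ), and η, μ, ξ, ε to the products
   δα, σρ, βν, ωγ.  Rewriting with the relations of S(λ) shows that S(λ) is
   spanned by 40 paths, and dim T(C) = 2 dim C(λ) = 40.  The images of these
   paths are nonzero multiples of a basis of T(C), except for γσ and νδ,
   whose images form a 2×2 block of determinant λ(1 - λ); hence the map is
   bijective exactly when λ ≠ 0, 1.  All identities in C(λ) and T(C) are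
   checked by computation, through the faithful representation of C(λ) on
   itself by 20×20 monomial matrices. *)

From HB Require Import structures.
From mathcomp Require Import all_boot all_order all_algebra.
From mathcomp Require Import boolp ring.

Set Implicit Arguments.
Unset Strict Implicit.
Unset Printing Implicit Defensive.

Import GRing.Theory.
Local Open Scope ring_scope.

(** * Spans and bases *)

Section Span.
Variables (K : fieldType) (U : lmodType K) (n : nat).

Definition in_span (u : nat -> U) (x : U) : Prop :=
  exists c : nat -> K, x = \sum_(i < n) c i *: u i.

Variable u : nat -> U.

Lemma in_span0 : in_span u 0.
Proof. by exists (fun _ => 0); rewrite big1 // => i _; rewrite scale0r. Qed.

Lemma in_spanD x y : in_span u x -> in_span u y -> in_span u (x + y).
Proof.
move=> [c ->] [d ->]; exists (fun i => c i + d i).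
by rewrite -big_split; apply: eq_bigr => i _; rewrite scalerDl.
Qed.

Lemma in_spanZ k x : in_span u x -> in_span u (k *: x).
Proof.
move=> [c ->]; exists (fun i => k * c i).
by rewrite scaler_sumr; apply: eq_bigr => i _; rewrite scalerA.
Qed.

Lemma in_span_sum (I : Type) (r : seq I) (F : I -> U) :
  (forall i, in_span u (F i)) -> in_span u (\sum_(i <- r) F i).
Proof. by move=> HF; elim/big_rec: _ => [|i x _]; [exact: in_span0 | exact: in_spanD]. Qed.

Lemma in_span_elt i : (i < n)%N -> in_span u (u i).
Proof.
move=> ltin; exists (fun j => (j == i)%:R).
rewrite (bigD1 (Ordinal ltin)) //= eqxx scale1r big1 ?addr0 // => j /eqP Hj.
by rewrite (_ : (j == i :> nat) = false) ?scale0r //; apply/eqP => Ej; apply: Hj; apply: val_inj.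
Qed.

Lemma in_span_trans (v : nat -> U) : (forall x, in_span v x) ->
  (forall i, (i < n)%N -> in_span u (v i)) -> forall x, in_span u x.
Proof.
move=> v_span vu x; have [c ->] := v_span x.
by apply: in_span_sum => i; apply: in_spanZ; apply: vu.
Qed.

End Span.

Section BasisImage.
Variables (K : fieldType) (U W : lmodType K) (phi : {linear U -> W}) (n : nat).
Variables (u : nat -> U) (w : nat -> W) (d : nat -> K).
Hypotheses (u_span : forall x, in_span n u x) (w_span : forall y, in_span n w y)
  (w_free : forall c : nat -> K, \sum_(i < n) c i *: w i = 0 -> forall i, (i < n)%N -> c i = 0)
  (phi_u : forall i, (i < n)%N -> phi (u i) = d i *: w i)
  (d_neq0 : forall i, (i < n)%N -> d i != 0).

Lemma basis_image_inj : injective phi.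
Proof.
move=> x y Exy; apply/eqP; rewrite -subr_eq0; apply/eqP.
have [c Ec] := u_span (x - y).
have cd0 : \sum_(i < n) (c i * d i) *: w i = 0.
  have : phi (x - y) = 0 by rewrite linearB Exy subrr.
  rewrite Ec linear_sum => E; rewrite -[RHS]E; apply: eq_bigr => i _.
  by rewrite linearZ_LR (phi_u (ltn_ord i)) scalerA.
rewrite Ec big1 // => i _; have /eqP := @w_free (fun i => c i * d i) cd0 i (ltn_ord i).
by rewrite mulf_eq0 (negPf (d_neq0 (ltn_ord i))) orbF => /eqP ->; rewrite scale0r.
Qed.

Lemma basis_image_onto y : exists x, phi x = y.
Proof.
have [c ->] := w_span y; exists (\sum_(i < n) (c i / d i) *: u i).
rewrite linear_sum; apply: eq_bigr => i _.
by rewrite linearZ_LR (phi_u (ltn_ord i)) scalerA divfK // d_neq0.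
Qed.

End BasisImage.

(** * Path algebras and presentations *)

Section PathAlgebra.
Variables (K : fieldType) (V A : finType) (s t : A -> V).

Local Notation qpath := (qpath V A).
Local Notation kq := (kq K V A).
Local Notation is_qpath := (is_qpath s t).
Local Notation ptgt := (ptgt t).
Local Notation kq_valid := (kq_valid s t).
Local Notation kmul := (kmul t).
Local Notation kpath := (kpath K).

Definition kq_data (B : algType K) (e : V -> B) (x : A -> B) : Prop :=
  [/\ forall v w, e v * e w = (if v == w then e v else 0),
      \sum_(v : V) e v = 1 &
      forall a, x a = e (s a) * x a * e (t a)].

Lemma is_qpath_cat (p q : qpath) : is_qpath p -> is_qpath q ->
  ptgt p = psrc q -> is_qpath (p.1, p.2 ++ q.2).
Proof.
case: p => v [|a w]; case: q => u [|b w']; rewrite /is_qpath /ptgt /psrc //=.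
- by move=> _ Hq ->.
- by rewrite cats0.
move=> /andP[-> Hp] /andP[/eqP Hb Hq] Ht /=.
by rewrite cat_path Hp /= Hq andbT Hb -Ht last_map.
Qed.

Lemma kq_valid_cat (f g : kq) : kq_valid (f ++ g) = kq_valid f && kq_valid g.
Proof. exact: all_cat. Qed.

Lemma kq_valid_scale c (f : kq) : kq_valid (kscale c f) = kq_valid f.
Proof. exact: all_map. Qed.

Lemma kq_valid_mul (f g : kq) : kq_valid f -> kq_valid g -> kq_valid (kmul f g).
Proof.
move=> /allP Hf /allP Hg; apply/allP => z /flattenP[r /mapP[z1 z1f ->]].
case/mapP => w; rewrite mem_filter => /andP[/eqP Ht wg] -> /=.
exact: is_qpath_cat (Hf _ z1f) (Hg _ wg) Ht.
Qed.

Section Evaluation.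
Variables (B : algType K) (e : V -> B) (x : A -> B).
Hypothesis ex : kq_data e x.

Lemma idem_mul v w : e v * e w = (if v == w then e v else 0).
Proof. by case: ex. Qed.

Lemma idem_idem v : e v * e v = e v.
Proof. by rewrite idem_mul eqxx. Qed.

Lemma arrow_idl a : e (s a) * x a = x a.
Proof. by case: ex => _ _ xE; rewrite xE !mulrA idem_idem. Qed.

Lemma arrow_idr a : x a * e (t a) = x a.
Proof. by case: ex => _ _ xE; rewrite xE -!mulrA idem_idem. Qed.

Lemma peval_word v w : w != [::] -> peval e x (v, w) = \prod_(a <- w) x a.
Proof. by case: w. Qed.

Lemma peval_idr (p : qpath) : peval e x p * e (ptgt p) = peval e x p.
Proof.
case: p => v [|a w]; rewrite /peval /ptgt /=; first by rewrite idem_idem.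
elim/last_ind: w => [|w b _]; first by rewrite big_seq1 arrow_idr.
by rewrite -rcons_cons map_rcons last_rcons -cats1 big_cat big_seq1 -mulrA arrow_idr.
Qed.

Lemma peval_idl (p : qpath) : is_qpath p -> e (psrc p) * peval e x p = peval e x p.
Proof.
case: p => v [|a w]; rewrite /peval /is_qpath /psrc /=; first by rewrite idem_idem.
by move=> /andP[/eqP <- _]; rewrite big_cons mulrA arrow_idl.
Qed.

Lemma peval_cat (p q : qpath) : is_qpath q -> ptgt p = psrc q ->
  peval e x (p.1, p.2 ++ q.2) = peval e x p * peval e x q.
Proof.
case: p => v [|a w]; case: q => u [|b w']; rewrite /peval /is_qpath /ptgt /psrc //=.
- by move=> _ <-; rewrite idem_idem.
- by move=> /andP[/eqP Hb _] ->; rewrite big_cons mulrA -Hb arrow_idl.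
- by move=> _ <-; rewrite cats0; have := peval_idr (v, a :: w).
by move=> _ _; rewrite -cat_cons big_cat.
Qed.

Lemma peval_mismatch (p q : qpath) : is_qpath q -> ptgt p != psrc q ->
  peval e x p * peval e x q = 0.
Proof.
move=> Hq Hpq; rewrite -(peval_idr p) -(peval_idl Hq) mulrA -(mulrA (peval e x p)).
by rewrite idem_mul (negPf Hpq) mulr0 mul0r.
Qed.

Lemma peval_rcons (p : qpath) a : ptgt p = s a ->
  peval e x p * x a = \prod_(b <- rcons p.2 a) x b.
Proof.
move=> Hpa; have Ha : is_qpath (s a, [:: a]) by rewrite /is_qpath /= eqxx.
have := peval_cat Ha Hpa; rewrite /= cats1 peval_word => [->|]; last by case: (p.2).
by rewrite /peval /= big_seq1.
Qed.

Lemma peval_rcons_mismatch (p : qpath) a : ptgt p != s a -> peval e x p * x a = 0.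
Proof.
move=> Hpa; have Ha : is_qpath (s a, [:: a]) by rewrite /is_qpath /= eqxx.
by have := peval_mismatch Ha Hpa; rewrite /peval big_seq1.
Qed.

Lemma keval_cons z (f : kq) : keval e x (z :: f) = z.1 *: peval e x z.2 + keval e x f.
Proof. exact: big_cons. Qed.

Lemma keval_cat (f g : kq) : keval e x (f ++ g) = keval e x f + keval e x g.
Proof. exact: big_cat. Qed.

Lemma keval_scale c (f : kq) : keval e x (kscale c f) = c *: keval e x f.
Proof.
rewrite /keval /kscale big_map scaler_sumr.
by apply: eq_bigr => z _; rewrite scalerA.
Qed.

Lemma keval_kpath (p : qpath) : keval e x (kpath p) = peval e x p.
Proof. by rewrite /keval big_seq1 scale1r. Qed.

Lemma keval_flatten (fs : seq kq) : keval e x (flatten fs) = \sum_(f <- fs) keval e x f.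
Proof.
elim: fs => [|f fs IH]; first by rewrite /keval !big_nil.
by rewrite /= keval_cat IH big_cons.
Qed.

Lemma keval_mul (f g : kq) : kq_valid g ->
  keval e x (kmul f g) = keval e x f * keval e x g.
Proof.
move=> /allP Hg; rewrite /kmul keval_flatten big_map /keval mulr_suml.
apply: eq_bigr => z _; rewrite big_map big_filter mulr_sumr big_mkcond /=.
rewrite [RHS]big_seq [LHS]big_seq; apply: eq_bigr => w /Hg Vw.
rewrite -scalerAl -scalerAr scalerA.
by case: eqP => [/(peval_cat Vw) <-|/eqP /(peval_mismatch Vw) ->]; rewrite ?scaler0.
Qed.

Lemma keval_binomial v v' w w' (c : K) : w != [::] -> w' != [::] ->
  keval e x [:: (1, (v, w)); (c, (v', w'))] =
  \prod_(a <- w) x a + c *: \prod_(a <- w') x a.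
Proof.
by move=> Hw Hw'; rewrite !keval_cons /keval big_nil addr0 scale1r !peval_word.
Qed.

Lemma keval_kcoef (f g : kq) : (forall q, kcoef f q = kcoef g q) ->
  keval e x f = keval e x g.
Proof.
pose ps := undup (map snd (f ++ g)).
suff keval_coef h : {subset map snd h <= ps} ->
    keval e x h = \sum_(q <- ps) kcoef h q *: peval e x q.
  move=> Efg; rewrite !keval_coef; first by apply: eq_bigr => q _; rewrite Efg.
    by move=> q qg; rewrite mem_undup map_cat mem_cat qg orbT.
  by move=> q qf; rewrite mem_undup map_cat mem_cat qf.
elim: h => [|z h IH] sub.
  by rewrite /keval !big_nil big1 // => q _; rewrite /kcoef big_nil scale0r.
rewrite keval_cons IH; last by move=> q qh; apply: sub; rewrite inE qh orbT.
have kcoef_cons q : kcoef (z :: h) q = (if z.2 == q then z.1 else 0) + kcoef h q.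
  by rewrite /kcoef big_cons; case: ifP; rewrite ?add0r.
under [RHS]eq_bigr => q _ do rewrite kcoef_cons scalerDl.
rewrite big_split /=; congr (_ + _).
have zps : z.2 \in ps by apply: sub; rewrite mem_head.
rewrite (bigD1_seq z.2) ?undup_uniq //= eqxx big1 ?addr0 // => q /negPf nq.
by rewrite eq_sym nq scale0r.
Qed.

Lemma keval_ideal (R : seq kq) (f : kq) :
  (forall r, r \in R -> kq_valid r /\ keval e x r = 0) ->
  in_ideal s t R f -> keval e x f = 0.
Proof.
move=> HR [l [/allP Hl Ef]]; rewrite (keval_kcoef Ef) keval_flatten big_map big_seq.
apply: big1 => z /Hl /and3P[_ /HR [Vr Er] Vw].
rewrite keval_scale keval_mul /kq_valid /= ?Vw // keval_mul //.
by rewrite Er mulr0 mul0r scaler0.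
Qed.

End Evaluation.

Definition kq_homog (r : kq) : bool :=
  if r is z :: _ then all (fun z' => (psrc z'.2 == psrc z.2) && (ptgt z'.2 == ptgt z.2)) r
  else true.

Lemma rel_in_ideal (R : seq kq) (r : kq) v u : r \in R ->
  all (fun z => (psrc z.2 == v) && (ptgt z.2 == u)) r -> in_ideal s t R r.
Proof.
move=> Hr /allP Hz; exists [:: (1, (v, [::]), r, (u, [::]))]; split.
  by rewrite /= Hr /is_qpath.
move=> q; congr kcoef; rewrite /= cats0 /kmul /kscale /= cats0.
elim: r {Hr} Hz => [|[c [w p]] r IH] Hz //=.
have /andP[/eqP Ew /eqP Eu] := Hz _ (mem_head _ _); rewrite /psrc /= in Ew.
subst w; rewrite /ptgt /= in Eu; rewrite /ptgt /psrc /= eqxx /= Eu eqxx /=.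
rewrite cats0 !mul1r mulr1 -IH // => z zr.
by apply: Hz; rewrite inE zr orbT.
Qed.

Section Presentation.
Variables (R : seq kq) (B : algType K) (e : V -> B) (x : A -> B).
Hypotheses (ex : kq_data e x)
  (keval_onto : forall b, exists f, kq_valid f /\ keval e x f = b)
  (keval_ker : forall f, kq_valid f -> keval e x f = 0 <-> in_ideal s t R f).

Lemma presented_rel (r : kq) : r \in R -> kq_valid r -> kq_homog r -> keval e x r = 0.
Proof.
case: r => [|z r] Hr Vr Hz; first by rewrite /keval big_nil.
by apply/(keval_ker Vr); apply: rel_in_ideal Hr Hz.
Qed.

Lemma presented_binomial v w v' w' (c : K) :
  let r := [:: (1, (v, w)); (c, (v', w'))] in
  r \in R -> kq_valid r -> kq_homog r -> w != [::] -> w' != [::] ->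
  \prod_(a <- w) x a = - c *: \prod_(a <- w') x a.
Proof.
move=> r Rr Vr Hr Hw Hw'; have /eqP := presented_rel Rr Vr Hr.
by rewrite keval_binomial // addr_eq0 scaleNr => /eqP.
Qed.

Lemma presented_monomial v w : kpath (v, w) \in R -> is_qpath (v, w) -> w != [::] ->
  \prod_(a <- w) x a = 0.
Proof.
move=> Rr Vp Hw; have := presented_rel Rr; rewrite /kq_valid /kq_homog /= Vp !eqxx.
by rewrite keval_kpath peval_word // => ->.
Qed.

Lemma presentation_lift (M : algType K) (e' : V -> M) (x' : A -> M) :
  kq_data e' x' -> (forall r, r \in R -> kq_valid r /\ keval e' x' r = 0) ->
  exists psi : {lrmorphism B -> M},
    forall f, kq_valid f -> psi (keval e x f) = keval e' x' f.
Proof.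
(* [psi] evaluates in M some preimage in KQ; two preimages differ by an element
   of the ideal generated by R, which vanishes in M. *)
move=> ex' HR; pose psi b := keval e' x' (sval (cid (keval_onto b))).
have psiE f : kq_valid f -> psi (keval e x f) = keval e' x' f.
  move=> Vf; rewrite /psi; case: cid => g [Vg Eg] /=.
  have Vfg : kq_valid (f ++ kscale (-1) g) by rewrite kq_valid_cat kq_valid_scale Vf.
  have : keval e x (f ++ kscale (-1) g) = 0.
    by rewrite keval_cat keval_scale Eg scaleN1r subrr.
  move/(keval_ker Vfg)/(keval_ideal ex' HR).
  by rewrite keval_cat keval_scale scaleN1r => /eqP; rewrite subr_eq0 => /eqP.
have psiL : linear psi.
  move=> k u v; have [fu [Vu <-]] := keval_onto u; have [fv [Vv <-]] := keval_onto v.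
  rewrite -keval_scale -keval_cat psiE ?kq_valid_cat ?kq_valid_scale ?Vu //.
  by rewrite keval_cat keval_scale !psiE.
have psiM : monoid_morphism psi.
  split=> [|u v].
    have -> : 1 = keval e x [seq (1, (v, [::])) | v <- enum V].
      case: ex => _ <- _; rewrite /keval big_map big_enum /=.
      by apply: eq_bigr => v _; rewrite scale1r.
    rewrite psiE; last by rewrite /kq_valid all_map; apply/allP.
    case: ex' => _ <- _; rewrite /keval big_map big_enum /=.
    by apply: eq_bigr => v _; rewrite scale1r.
  have [fu [Vu <-]] := keval_onto u; have [fv [Vv <-]] := keval_onto v.
  by rewrite -(keval_mul ex) // psiE ?kq_valid_mul // (keval_mul ex') // !psiE.
pose psiLM : {lrmorphism B -> M} := HB.pack psi
  (GRing.isLinear.Build _ _ _ _ psi psiL) (GRing.isMonoidMorphism.Build _ _ psi psiM).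
by exists psiLM.
Qed.

Lemma presentation_span (p0 : qpath) (ps : seq qpath) :
  (forall v, (v, [::]) \in ps) ->
  {in ps, forall p a, exists2 q, q \in ps & exists c, peval e x p * x a = c *: peval e x q} ->
  forall b, in_span (size ps) (fun i => peval e x (nth p0 ps i)) b.
Proof.
move=> ps_idem ps_closed; pose spanned := in_span (size ps) (fun i => peval e x (nth p0 ps i)).
have span_path q : q \in ps -> spanned (peval e x q).
  by move=> qps; rewrite -(nth_index p0 qps); apply: in_span_elt; rewrite index_mem.
have span_word v w : spanned (e v * \prod_(a <- w) x a).
  elim/last_ind: w => [|w a [c Ec]]; first by rewrite big_nil mulr1; exact: (span_path (v, [::])).
  rewrite -cats1 big_cat big_seq1 mulrA Ec mulr_suml; apply: in_span_sum => i.
  rewrite -scalerAl; apply: in_spanZ.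
  have [q qps [d ->]] := ps_closed (nth p0 ps i) (mem_nth p0 (ltn_ord i)) a.
  by apply: in_spanZ; apply: span_path.
move=> b; have [f [Vf <-]] := keval_onto b.
elim: f Vf => [_|z f IH /andP[Vz /IH]]; first by rewrite /keval big_nil; exact: in_span0.
move=> Hf; rewrite keval_cons; apply: in_spanD Hf; apply: in_spanZ.
rewrite -(peval_idl ex Vz); case: z {Vz} => c [v [|a w]]; rewrite /peval /psrc /=.
  by rewrite (idem_idem ex); have := span_word v [::]; rewrite big_nil mulr1.
exact: span_word.
Qed.

End Presentation.

End PathAlgebra.

(** * Rewriting with binomial relations *)

Section BinomialRewriting.
Variables (K : fieldType) (T : eqType).

Definition rw_rule := (seq T * int * seq T)%type.

Definition rw_at (l r w : seq T) : seq (seq T) :=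
  [seq take n w ++ r ++ drop (n + size l) w
  | n <- iota 0 (size w).+1 & prefix l (drop n w)].

Definition rw_step (rules : seq rw_rule) (wk : seq T * int) : seq (seq T * int) :=
  flatten [seq [seq (w, wk.2 + rl.1.2) | w <- rw_at rl.1.1 rl.2 wk.1] ++
               [seq (w, wk.2 - rl.1.2) | w <- rw_at rl.2 rl.1.1 wk.1]
          | rl <- rules].

(* A rule (l, k, r) stands for the relation l = λ^k r between words of arrows, and is
   used in both directions.  Along a chain of at most d rewritings the pairs
   (w, k) produced keep λ^k w constant. *)
Fixpoint rw_reach (rules : seq rw_rule) (d : nat) (wk : seq T * int) :=
  wk :: if d is d'.+1 then flatten [seq rw_reach rules d' wk' | wk' <- rw_step rules wk]
        else [::].

Definition rw_zero (zeros : seq (seq T)) (w : seq T) : bool := has (fun z => infix z w) zeros.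

Section Soundness.
Variables (B : algType K) (x : T -> B) (lam : K).
Variables (rules : seq rw_rule) (zeros : seq (seq T)).
Hypotheses (lam0 : lam != 0)
  (rules_sound : forall rl, rl \in rules ->
     \prod_(a <- rl.1.1) x a = lam ^ rl.1.2 *: \prod_(a <- rl.2) x a)
  (zeros_sound : forall z, z \in zeros -> \prod_(a <- z) x a = 0).

Lemma rw_at_sound (l r w w' : seq T) c :
  \prod_(a <- l) x a = c *: \prod_(a <- r) x a -> w' \in rw_at l r w ->
  \prod_(a <- w) x a = c *: \prod_(a <- w') x a.
Proof.
move=> Elr /mapP[n]; rewrite mem_filter => /andP[/prefixP[v Ev] _] ->.
rewrite addnC -drop_drop Ev drop_size_cat // -{1}(cat_take_drop n w) Ev.
by rewrite !big_cat /= Elr -scalerAl -scalerAr.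
Qed.

Lemma rw_step_sound wk wk' : wk' \in rw_step rules wk ->
  lam ^ wk'.2 *: \prod_(a <- wk'.1) x a = lam ^ wk.2 *: \prod_(a <- wk.1) x a.
Proof.
case/flattenP=> _ /mapP[[[l c] r] /rules_sound /= Elr ->]; rewrite mem_cat.
case/orP=> /mapP[w' Hw' ->] /=.
  by rewrite (rw_at_sound Elr Hw') scalerA -expfzDr.
have Erl : \prod_(a <- r) x a = lam ^ (- c) *: \prod_(a <- l) x a.
  by rewrite Elr scalerA -expfzDr // addNr expr0z scale1r.
by rewrite (rw_at_sound Erl Hw') scalerA -expfzDr // addrNK.
Qed.

Lemma rw_reach_sound d wk wk' : wk' \in rw_reach rules d wk ->
  lam ^ wk'.2 *: \prod_(a <- wk'.1) x a = lam ^ wk.2 *: \prod_(a <- wk.1) x a.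
Proof.
elim: d wk => [|d IH] wk /=; rewrite in_cons => /orP[/eqP -> //|] //.
by case/flattenP=> _ /mapP[wk1 /rw_step_sound <- ->] /IH.
Qed.

Lemma rw_zero_sound w : rw_zero zeros w -> \prod_(a <- w) x a = 0.
Proof.
case/hasP=> z /zeros_sound Ez /infixP[u [v ->]].
by rewrite !big_cat /= Ez mul0r mulr0.
Qed.

End Soundness.
End BinomialRewriting.

(* Equality on the vertex and arrow types of the quivers does not reduce under
   [vm_compute] (it is defined through [inord]), so the words handed to the
   rewriting engine are encoded by injective maps into [nat]. *)
Section RewritingSpan.
Variables (K : fieldType) (V A : finType) (s t : A -> V).
Variables (vc : V -> nat) (ac : A -> nat).
Variables (rules : seq (rw_rule nat)) (zeros : seq (seq nat)).

Definition qpath_code (p : qpath V A) : nat * seq nat := (vc p.1, map ac p.2).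

Definition rw_normal (ps : seq (qpath V A)) (v : V) (wk : seq nat * int) : bool :=
  rw_zero zeros wk.1 || (wk.1 != [::]) && ((vc v, wk.1) \in map qpath_code ps).

Definition rw_closed_at (d : nat) (ps : seq (qpath V A)) (a : A) : bool :=
  all (fun p => (vc (ptgt t p) != vc (s a)) ||
         has (rw_normal ps p.1) (rw_reach rules d (map ac (rcons p.2 a), 0))) ps.

Definition rw_table (d : nat) (ps : seq (qpath V A)) (p : qpath V A) (a : A) :
    option (nat * int) :=
  let wks := rw_reach rules d (map ac (rcons p.2 a), 0) in
  let wk := nth ([::], 0) wks (find (rw_normal ps p.1) wks) in
  if (vc (ptgt t p) != vc (s a)) || rw_zero zeros wk.1 then None
  else Some (index (vc p.1, wk.1) (map qpath_code ps), wk.2).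

Hypotheses (vc_inj : injective vc) (ac_inj : injective ac).

Lemma qpath_code_inj : injective qpath_code.
Proof.
move=> [v w] [v' w'] [/vc_inj -> /(inj_map ac_inj) ->]; done.
Qed.

Variables (B : algType K) (e : V -> B) (x : A -> B) (lam : K).

Definition code_eval (n : nat) : B := \sum_(a | ac a == n) x a.

Lemma code_eval_word (w : seq A) :
  \prod_(n <- map ac w) code_eval n = \prod_(a <- w) x a.
Proof.
rewrite big_map; apply: eq_bigr => a _; rewrite /code_eval (big_pred1 a) //.
by move=> b; rewrite /= (inj_eq ac_inj).
Qed.

Hypotheses (ex : kq_data s t e x) (lam0 : lam != 0)
  (rules_sound : forall rl, rl \in rules ->
     \prod_(n <- rl.1.1) code_eval n = lam ^ rl.1.2 *: \prod_(n <- rl.2) code_eval n)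
  (zeros_sound : forall z, z \in zeros -> \prod_(n <- z) code_eval n = 0).

Lemma rw_closed_mul d ps : (forall a, rw_closed_at d ps a) ->
  {in ps, forall p a, exists2 q, q \in ps & exists c, peval e x p * x a = c *: peval e x q}.
Proof.
move=> Hclosed p pps a; have /allP/(_ p pps) := Hclosed a.
case: (eqVneq (ptgt t p) (s a)) => [Hpa|Hpa] /=; last first.
  by exists p => //; exists 0; rewrite scale0r (peval_rcons_mismatch ex).
rewrite Hpa eqxx /=; case/hasP=> -[w k] /(rw_reach_sound lam0 rules_sound) /=.
rewrite expr0z scale1r code_eval_word -(peval_rcons ex Hpa) => Ew.
case/orP=> [/(rw_zero_sound zeros_sound) w0|/andP[Hw /mapP[q qps [Eq Ew']]]].
  by exists p => //; exists 0; rewrite -Ew w0 scaler0 scale0r.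
exists q => //; exists (lam ^ k); rewrite -Ew Ew' code_eval_word.
by case: q {qps Eq} Ew' => v [|b w'] /= Ew'; rewrite Ew' in Hw.
Qed.

End RewritingSpan.

(** * Monomial matrices *)

(* A table [m] describes the (n+1)×(n+1) matrix whose row i is λ^k e_j when
   [m i = Some (j, k)] and 0 when [m i = None]; a state [Some (j, k)] stands
   for the row λ^k e_j, so products of such matrices are evaluated on rows by
   running the tables. *)
Section MonomialMatrices.
Variables (K : fieldType) (lam : K) (n : nat).
Hypothesis lam0 : lam != 0.

Definition mstate := option (nat * int).
Definition mstate_ok (st : mstate) : bool := if st is Some (j, _) then (j < n.+1)%N else true.
Definition mtable_ok (m : nat -> mstate) : bool := all (fun i => mstate_ok (m i)) (iota 0 n.+1).

Definition mono_mx (m : nat -> mstate) : 'M[K]_n.+1 :=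
  \matrix_(i, j) if m i is Some (j', k) then (j' == j)%:R * lam ^ k else 0.

Definition state_row (st : mstate) : 'rV[K]_n.+1 :=
  if st is Some (j, k) then lam ^ k *: delta_mx 0 (inord j) else 0.

Definition mstep (m : nat -> mstate) (st : mstate) : mstate :=
  if st is Some (j, k) then (if m j is Some (j', k') then Some (j', k' + k) else None)
  else None.

Definition mrun (ms : seq (nat -> mstate)) (st : mstate) : mstate :=
  foldl (fun st m => mstep m st) st ms.

Definition mshift (c : int) (st : mstate) : mstate :=
  if st is Some (j, k) then Some (j, k + c) else None.

Lemma mstep_ok m st : mtable_ok m -> mstate_ok st -> mstate_ok (mstep m st).
Proof.
move=> /allP Hm; case: st => [[j k]|] //= Hj.
by have := Hm j; rewrite mem_iota add0n => /(_ Hj); case: (m j) => [[]|].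
Qed.

Lemma mrun_ok ms st : all mtable_ok ms -> mstate_ok st -> mstate_ok (mrun ms st).
Proof.
by elim: ms st => [|m ms IH] st //= /andP[Hm Hms] Hst; apply: IH => //; apply: mstep_ok.
Qed.

Lemma state_row_mul m st : mtable_ok m -> mstate_ok st ->
  state_row st *m mono_mx m = state_row (mstep m st).
Proof.
move=> /allP Hm; case: st => [[j k]|] /= Hj; last by rewrite mul0mx.
rewrite -scalemxAl -rowE; apply/rowP => c; rewrite !mxE inordK //.
have := Hm j; rewrite mem_iota add0n => /(_ Hj).
case: (m j) => [[j' k'] /= Hj'|_]; last by rewrite mxE mulr0.
rewrite !mxE /= expfzDr //.
have -> : (c == inord j' :> 'I_n.+1) = (j' == c).
  apply/eqP/eqP => [->|Ej]; first by rewrite inordK.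
  by apply: val_inj; rewrite /= inordK // Ej.
by ring.
Qed.

Lemma state_row_prod ms st : all mtable_ok ms -> mstate_ok st ->
  state_row st *m \prod_(m <- ms) mono_mx m = state_row (mrun ms st).
Proof.
elim: ms st => [|m ms IH] st /=; first by rewrite big_nil mulmx1.
move=> /andP[Hm Hms] Hst; rewrite big_cons -mulmxE mulmxA state_row_mul //.
by rewrite IH // mstep_ok.
Qed.

Lemma state_row_shift c st : state_row (mshift c st) = lam ^ c *: state_row st.
Proof. by case: st => [[j k]|] /=; rewrite ?scaler0 // scalerA expfzDr // mulrC. Qed.

Lemma mono_mx_ext (M1 M2 : 'M[K]_n.+1) :
  (forall i, (i < n.+1)%N -> state_row (Some (i, 0)) *m M1 = state_row (Some (i, 0)) *m M2) ->
  M1 = M2.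
Proof.
move=> H; apply/row_matrixP => i; rewrite !rowE.
by have := H i (ltn_ord i); rewrite /state_row expr0z !scale1r inord_val.
Qed.

Lemma mono_prod_eq ms1 ms2 c : all mtable_ok ms1 -> all mtable_ok ms2 ->
  all (fun i => mrun ms1 (Some (i, 0)) == mshift c (mrun ms2 (Some (i, 0)))) (iota 0 n.+1) ->
  \prod_(m <- ms1) mono_mx m = lam ^ c *: \prod_(m <- ms2) mono_mx m.
Proof.
move=> H1 H2 /allP H; apply: mono_mx_ext => i Hi; rewrite -scalemxAr !state_row_prod //.
by rewrite (eqP (H i _)) ?state_row_shift // mem_iota.
Qed.

Lemma mono_prod_eq0 ms : all mtable_ok ms ->
  all (fun i => mrun ms (Some (i, 0)) == None) (iota 0 n.+1) ->
  \prod_(m <- ms) mono_mx m = 0.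
Proof.
move=> Hms /allP H; apply: mono_mx_ext => i Hi; rewrite mulmx0 state_row_prod //.
by rewrite (eqP (H i _)) // mem_iota.
Qed.

End MonomialMatrices.

(** * Trivial extensions *)

Section TrivialExtension.
Variables (K : fieldType) (C : algType K).

Section LinearFunctional.
Variable h : C -> K.
Hypothesis hL : lin_functional h.

Lemma lin_functionalD u v : h (u + v) = h u + h v.
Proof. by have := hL 1 u v; rewrite scale1r mul1r. Qed.

Lemma lin_functional0 : h 0 = 0.
Proof. by apply: (addrI (h 0)); rewrite -lin_functionalD !addr0. Qed.

Lemma lin_functionalZ k u : h (k *: u) = k * h u.
Proof. by have := hL k u 0; rewrite !addr0 lin_functional0 addr0. Qed.

Lemma lin_functional_sum (I : Type) (r : seq I) (P : pred I) (F : I -> C) :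
  h (\sum_(i <- r | P i) F i) = \sum_(i <- r | P i) h (F i).
Proof. exact: (big_morph h lin_functionalD lin_functional0). Qed.

End LinearFunctional.

Record triv_ext := TrivExt {
  te_val : C * (C -> K);
  _ : `[< lin_functional te_val.2 >] }.

HB.instance Definition _ := [isSub for te_val].
HB.instance Definition _ := [Choice of triv_ext by <:].

Lemma te_lin (p : triv_ext) : lin_functional (te_val p).2.
Proof. by case: p => -[c h] /= /asboolP. Qed.

Lemma te_eq (p q : triv_ext) :
  (te_val p).1 = (te_val q).1 -> (te_val p).2 =1 (te_val q).2 -> p = q.
Proof.
move=> E1 E2; apply: val_inj => /=; case: (te_val p) E1 E2 => a f; case: (te_val q) => b g /= -> E.
by rewrite (funext E).
Qed.

Definition te_build (c : C) (h : C -> K) (hL : lin_functional h) : triv_ext :=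
  @TrivExt (c, h) (asboolT hL).

Lemma te_zero_lin : lin_functional (fun _ : C => 0).
Proof. by move=> k u v; rewrite mulr0 addr0. Qed.

Definition te_embed (c : C) : triv_ext := te_build c te_zero_lin.

Lemma te_opp_lin (p : triv_ext) : lin_functional (fun u => - (te_val p).2 u).
Proof. by move=> k u v; rewrite (te_lin p) opprD mulrN. Qed.

Lemma te_add_lin (p q : triv_ext) :
  lin_functional (fun u => (te_val p).2 u + (te_val q).2 u).
Proof. by move=> k u v; rewrite (te_lin p) (te_lin q) mulrDr addrACA. Qed.

Lemma te_mul_lin (p q : triv_ext) : lin_functional (te_mul (te_val p) (te_val q)).2.
Proof.
move=> k u v /=; rewrite mulrDl -scalerAl (te_lin q) mulrDr -scalerAr (te_lin p).
by rewrite mulrDr addrACA.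
Qed.

Lemma te_scale_lin k (p : triv_ext) : lin_functional (fun u => k * (te_val p).2 u).
Proof. by move=> c u v; rewrite (te_lin p) mulrDr mulrCA. Qed.

Definition te_opp p := te_build (- (te_val p).1) (te_opp_lin p).
Definition te_add p q := te_build ((te_val p).1 + (te_val q).1) (te_add_lin p q).
Definition te_one := te_embed 1.
Definition te_mult p q := te_build (te_mul (te_val p) (te_val q)).1 (te_mul_lin p q).
Definition te_scale k p := te_build (k *: (te_val p).1) (te_scale_lin k p).

Lemma te_addA : associative te_add.
Proof. by move=> p q r; apply: te_eq => [|u] /=; rewrite addrA. Qed.
Lemma te_addC : commutative te_add.
Proof. by move=> p q; apply: te_eq => [|u] /=; rewrite addrC. Qed.
Lemma te_add0 : left_id (te_embed 0) te_add.
Proof. by move=> p; apply: te_eq => [|u] /=; rewrite add0r. Qed.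
Lemma te_addN : left_inverse (te_embed 0) te_opp te_add.
Proof. by move=> p; apply: te_eq => [|u] /=; rewrite addNr. Qed.

HB.instance Definition _ := GRing.isZmodule.Build triv_ext te_addA te_addC te_add0 te_addN.

Lemma te_mulA : associative te_mult.
Proof.
move=> p q r; apply: te_eq => [|u] /=; first by rewrite mulrA.
by rewrite !mulrA addrA.
Qed.
Lemma te_mul1 : left_id te_one te_mult.
Proof. by move=> p; apply: te_eq => [|u] /=; rewrite ?mul1r // mulr1 addr0. Qed.
Lemma te_mulr1 : right_id te_one te_mult.
Proof. by move=> p; apply: te_eq => [|u] /=; rewrite ?mulr1 // mul1r add0r. Qed.
Lemma te_mulDl : left_distributive te_mult te_add.
Proof.
move=> p q r; apply: te_eq => [|u] /=; first by rewrite mulrDl.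
by rewrite mulrDr (lin_functionalD (te_lin r)) addrACA.
Qed.
Lemma te_mulDr : right_distributive te_mult te_add.
Proof.
move=> p q r; apply: te_eq => [|u] /=; first by rewrite mulrDr.
by rewrite mulrDl (lin_functionalD (te_lin p)) addrACA.
Qed.
Lemma te_one_neq0 : te_one != te_embed 0.
Proof. by apply/eqP => /(congr1 (fun p => (te_val p).1)) /= /eqP; rewrite oner_eq0. Qed.

HB.instance Definition _ := GRing.Zmodule_isNzRing.Build triv_ext
  te_mulA te_mul1 te_mulr1 te_mulDl te_mulDr te_one_neq0.

Lemma te_scaleA a b p : te_scale a (te_scale b p) = te_scale (a * b) p.
Proof. by apply: te_eq => [|u] /=; rewrite ?scalerA ?mulrA. Qed.
Lemma te_scale1 : left_id 1 te_scale.
Proof. by move=> p; apply: te_eq => [|u] /=; rewrite ?scale1r ?mul1r. Qed.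
Lemma te_scaleDr : right_distributive te_scale te_add.
Proof. by move=> a p q; apply: te_eq => [|u] /=; rewrite ?scalerDr ?mulrDr. Qed.
Lemma te_scaleDl p : {morph te_scale^~ p : a b / a + b >-> te_add a b}.
Proof. by move=> a b; apply: te_eq => [|u] /=; rewrite ?scalerDl ?mulrDl. Qed.

HB.instance Definition _ := GRing.Zmodule_isLmodule.Build K triv_ext
  te_scaleA te_scale1 te_scaleDr te_scaleDl.

Lemma te_scaleAl (a : K) (p q : triv_ext) : a *: (p * q) = (a *: p) * q.
Proof.
apply: te_eq => [|u] /=; first by rewrite scalerAl.
by rewrite mulrDr -scalerAr (lin_functionalZ (te_lin q)).
Qed.
HB.instance Definition _ := GRing.Lmodule_isLalgebra.Build K triv_ext te_scaleAl.

Lemma te_scaleAr (a : K) (p q : triv_ext) : a *: (p * q) = p * (a *: q).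
Proof.
apply: te_eq => [|u] /=; first by rewrite scalerAr.
by rewrite mulrDr -scalerAl (lin_functionalZ (te_lin p)).
Qed.
HB.instance Definition _ := GRing.Lalgebra_isAlgebra.Build K triv_ext te_scaleAr.

Lemma te_embedM (a b : C) : te_embed a * te_embed b = te_embed (a * b).
Proof. by apply: te_eq => [|u] //=; rewrite addr0. Qed.

Lemma te_embedD (a b : C) : te_embed a + te_embed b = te_embed (a + b).
Proof. by apply: te_eq => [|u] //=; rewrite addr0. Qed.

Lemma te_embed0 : te_embed 0 = 0 :> triv_ext.
Proof. by apply: te_eq. Qed.

Lemma te_embed_sum (I : Type) (r : seq I) (F : I -> C) :
  te_embed (\sum_(i <- r) F i) = \sum_(i <- r) te_embed (F i).
Proof. by elim/big_rec2: _ => [|i a b _ <-]; rewrite ?te_embed0 ?te_embedD. Qed.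

End TrivialExtension.

(** * The algebras S(λ) and C(λ) *)

Section WeightedSurfaceRelations.
Variables (K : fieldType) (V A : finType) (s : A -> V) (f : A -> A) (m : A -> nat).
Variable c : A -> K.

Local Notation rels := (wsa_rels s f m c).

Lemma wsa_rels_binomial a :
  (1, (s a, [:: a; f a])) :: kscale (- c (bar s a)) (kpath K (Apath s f m (bar s a)))
  \in rels.
Proof. by apply/flatten_mapP; exists a; rewrite ?mem_enum ?mem_cat ?mem_head. Qed.

Lemma wsa_rels_zero_f a : ~~ virtual s f m (f (f a)) ->
  kpath K (s a, [:: a; f a; gperm s f (f a)]) \in rels.
Proof.
move=> Hv; apply/flatten_mapP; exists a; rewrite ?mem_enum //.
by rewrite !mem_cat (negPf Hv) mem_head orbT.
Qed.

Lemma wsa_rels_zero_g a : ~~ virtual s f m (f a) ->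
  kpath K (s a, [:: a; gperm s f a; f (gperm s f a)]) \in rels.
Proof.
move=> Hv; apply/flatten_mapP; exists a; rewrite ?mem_enum //.
by rewrite !mem_cat (negPf Hv) mem_head !orbT.
Qed.

Lemma wsa_relsP r : r \in wsa_rels s f m c -> exists a,
  [\/ r = (1, (s a, [:: a; f a])) :: kscale (- c (bar s a)) (kpath K (Apath s f m (bar s a))),
      ~~ virtual s f m (f (f a)) /\ r = kpath K (s a, [:: a; f a; gperm s f (f a)]) |
      ~~ virtual s f m (f a) /\ r = kpath K (s a, [:: a; gperm s f a; f (gperm s f a)])].
Proof.
case/flatten_mapP=> a _; rewrite !mem_cat => /or3P[Hr|Hr|Hr]; exists a.
- by move: Hr; rewrite inE => /eqP ->; constructor 1.
- by case: ifP Hr => // Hv; rewrite inE => /eqP ->; constructor 2; split => //; apply/negbT.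
- by case: ifP Hr => // Hv; rewrite inE => /eqP ->; constructor 3; split => //; apply/negbT.
Qed.

End WeightedSurfaceRelations.

Definition vtx_num (v : vtx) : nat :=
  match v with v1 => 0 | v2 => 1 | v3 => 2 | v4 => 3 | v5 => 4 | v6 => 5 end.
Definition sarr_num (a : sarr) : nat :=
  match a with s_alpha => 0 | s_beta => 1 | s_gamma => 2 | s_sigma => 3
  | s_rho => 4 | s_omega => 5 | s_nu => 6 | s_delta => 7 | s_xi => 8 | s_eta => 9
  | s_mu => 10 | s_eps => 11 end.
Definition carr_num (a : carr) : nat :=
  match a with c_alpha => 0 | c_beta => 1 | c_rho => 2 | c_omega => 3
  | c_delta => 4 | c_sigma => 5 end.

Lemma vtx_num_inj : injective vtx_num.
Proof. by do 2 case=> //= []. Qed.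
Lemma sarr_num_inj : injective sarr_num.
Proof. by do 2 case=> //= []. Qed.
Lemma carr_num_inj : injective carr_num.
Proof. by do 2 case=> //= []. Qed.

Definition sarr_all : seq sarr :=
  [:: s_alpha; s_beta; s_gamma; s_sigma; s_rho; s_omega;
      s_nu; s_delta; s_xi; s_eta; s_mu; s_eps].

Definition S_bar (a : sarr) : sarr :=
  match a with s_alpha => s_rho | s_rho => s_alpha | s_beta => s_xi | s_xi => s_beta
  | s_gamma => s_nu | s_nu => s_gamma | s_sigma => s_mu | s_mu => s_sigma
  | s_delta => s_eta | s_eta => s_delta | s_omega => s_eps | s_eps => s_omega end.
Definition S_g (a : sarr) : sarr := S_bar (S_f a).
Definition S_norb (a : sarr) : nat :=
  match a with s_xi | s_eta | s_mu | s_eps => 2 | _ => 4 end.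
Definition S_Apath (b : sarr) : seq sarr := [seq iter k S_g b | k <- iota 0 (S_norb b).-1].
Definition S_param_exp (b : sarr) : int :=
  match b with s_alpha | s_beta | s_gamma | s_sigma => 1 | _ => 0 end.

Lemma S_barE : bar S_src = S_bar.
Proof.
apply: funext => a; rewrite /bar; case: pickP => [b|/(_ (S_bar a))] /=;
  rewrite -(inj_eq vtx_num_inj) -(inj_eq sarr_num_inj).
  by case: a; case: b.
by case: a.
Qed.

Lemma S_gpermE : gperm S_src S_f = S_g.
Proof. by rewrite /gperm S_barE. Qed.

Lemma S_norbE : norb S_src S_f = S_norb.
Proof.
apply: funext => a; rewrite /norb S_gpermE.
have [orbit_cycle orbit_uniq] :
    fcycle S_g (traject S_g a (S_norb a)) /\ uniq (traject S_g a (S_norb a)).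
  by case: a; rewrite /= !inE -!(inj_eq sarr_num_inj).
rewrite (order_cycle orbit_cycle orbit_uniq) ?size_traject //.
by case: a {orbit_cycle orbit_uniq}; rewrite /= inE eqxx.
Qed.

Lemma S_virtualE b : virtual S_src S_f S_weight b = (S_norb b == 2).
Proof. by rewrite /virtual S_norbE /S_weight /=; case: b. Qed.

Lemma S_paramE (K : fieldType) (lam : K) b : S_param lam b = lam ^ S_param_exp b.
Proof. by case: b; rewrite /= ?expr1z ?expr0z. Qed.

(* The m-th path is sent by the isomorphism to a multiple of the m-th element
   of [T_basis] below, except at positions 32 and 33. *)
Definition S_basis : seq (qpath vtx sarr) :=
  [:: (v1, [::]); (v2, [::]); (v3, [::]); (v4, [::]); (v5, [::]); (v6, [::]);
      (v1, [:: s_alpha]); (v2, [:: s_beta]); (v1, [:: s_rho]); (v6, [:: s_omega]);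
      (v5, [:: s_delta]); (v4, [:: s_sigma]); (v1, [:: s_alpha; s_beta]);
      (v1, [:: s_rho; s_omega]); (v5, [:: s_eta]); (v5, [:: s_delta; s_rho]);
      (v4, [:: s_sigma; s_alpha]); (v4, [:: s_mu]); (v5, [:: s_delta; s_rho; s_omega]);
      (v4, [:: s_sigma; s_alpha; s_beta]); (v1, [:: s_alpha; s_beta; s_gamma; s_sigma]);
      (v2, [:: s_beta; s_gamma; s_sigma; s_alpha]);
      (v3, [:: s_gamma; s_sigma; s_alpha; s_beta]);
      (v4, [:: s_sigma; s_alpha; s_beta; s_gamma]);
      (v5, [:: s_delta; s_rho; s_omega; s_nu]); (v6, [:: s_omega; s_nu; s_delta; s_rho]);
      (v2, [:: s_beta; s_gamma; s_sigma]); (v3, [:: s_gamma; s_sigma; s_alpha]);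
      (v6, [:: s_omega; s_nu; s_delta]); (v3, [:: s_nu; s_delta; s_rho]);
      (v1, [:: s_rho; s_omega; s_nu]); (v1, [:: s_alpha; s_beta; s_gamma]);
      (v3, [:: s_gamma; s_sigma]); (v3, [:: s_nu; s_delta]); (v2, [:: s_xi]);
      (v6, [:: s_omega; s_nu]); (v2, [:: s_beta; s_gamma]); (v6, [:: s_eps]);
      (v3, [:: s_nu]); (v3, [:: s_gamma])].

Definition S_rules : seq (rw_rule nat) :=
  [seq (map sarr_num [:: a; S_f a], S_param_exp (S_bar a), map sarr_num (S_Apath (S_bar a)))
  | a <- sarr_all].

Definition S_zeros : seq (seq nat) :=
  [seq map sarr_num [:: a; S_f a; S_g (S_f a)] | a <- sarr_all & S_norb (S_f (S_f a)) != 2] ++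
  [seq map sarr_num [:: a; S_g a; S_f (S_g a)] | a <- sarr_all & S_norb (S_f a) != 2].

Lemma S_basis_closed a : rw_closed_at S_src S_tgt vtx_num sarr_num S_rules S_zeros 2 S_basis a.
Proof. by case: a; vm_compute. Qed.

Definition C_basis : seq (qpath vtx carr) :=
  [:: (v1, [::]); (v2, [::]); (v3, [::]); (v4, [::]); (v5, [::]); (v6, [::]);
      (v1, [:: c_alpha]); (v2, [:: c_beta]); (v1, [:: c_rho]); (v6, [:: c_omega]);
      (v5, [:: c_delta]); (v4, [:: c_sigma]);
      (v1, [:: c_alpha; c_beta]); (v1, [:: c_rho; c_omega]);
      (v5, [:: c_delta; c_alpha]); (v5, [:: c_delta; c_rho]);
      (v4, [:: c_sigma; c_alpha]); (v4, [:: c_sigma; c_rho]);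
      (v5, [:: c_delta; c_alpha; c_beta]); (v4, [:: c_sigma; c_alpha; c_beta])].

Definition C_rules : seq (rw_rule nat) :=
  [:: (map carr_num [:: c_delta; c_alpha; c_beta], 0, map carr_num [:: c_delta; c_rho; c_omega]);
      (map carr_num [:: c_sigma; c_rho; c_omega], 1, map carr_num [:: c_sigma; c_alpha; c_beta])].

Lemma C_basis_closed a : rw_closed_at C_src C_tgt vtx_num carr_num C_rules [::] 1 C_basis a.
Proof. by case: a; vm_compute. Qed.

Definition C_path (i : nat) : qpath vtx carr := nth (v1, [::]) C_basis i.

Inductive cletter := CV of vtx | CA of carr.

(* Right multiplication by the generators of C(λ) on the basis [C_basis]. *)
Definition C_table (g : cletter) (i : nat) : mstate :=
  match g with
  | CV v => if (i < 20)%N && (vtx_num (ptgt C_tgt (C_path i)) == vtx_num v)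
            then Some (i, 0) else None
  | CA a => rw_table C_src C_tgt vtx_num carr_num C_rules [::] 1 C_basis (C_path i) a
  end.

Lemma C_table_ok g : mtable_ok 19 (C_table g).
Proof. by case: g => -[]; vm_compute. Qed.

Lemma C_tables_ok w : all (mtable_ok 19) (map C_table w).
Proof. by elim: w => //= g w ->; rewrite C_table_ok. Qed.

Section CModel.
Variables (K : fieldType) (lam : K).
Hypothesis lam0 : lam != 0.

Definition C_mx (g : cletter) : 'M[K]_20 := mono_mx lam 19 (C_table g).
Definition C_mxw (w : seq cletter) : 'M[K]_20 := \prod_(g <- w) C_mx g.

Lemma C_mxw_eq w1 w2 c :
  all (fun i => mrun (map C_table w1) (Some (i, 0)) ==
                mshift c (mrun (map C_table w2) (Some (i, 0)))) (iota 0 20) ->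
  C_mxw w1 = lam ^ c *: C_mxw w2.
Proof.
move=> H; rewrite /C_mxw -!(big_map C_table predT).
exact: (mono_prod_eq lam0 (C_tables_ok w1) (C_tables_ok w2) H).
Qed.

Lemma C_mxw_eq0 w : all (fun i => mrun (map C_table w) (Some (i, 0)) == None) (iota 0 20) ->
  C_mxw w = 0.
Proof.
move=> H; rewrite /C_mxw -(big_map C_table predT).
exact: (mono_prod_eq0 lam0 (C_tables_ok w) H).
Qed.

Lemma C_mxw_eq1 w1 w2 :
  all (fun i => mrun (map C_table w1) (Some (i, 0)) == mrun (map C_table w2) (Some (i, 0)))
      (iota 0 20) ->
  C_mxw w1 = C_mxw w2.
Proof.
move=> H; rewrite -[C_mxw w2]scale1r -(expr0z lam); apply: C_mxw_eq.
by apply: sub_all H => i /eqP ->; case: mrun => [[j k]|] //=; rewrite addr0.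
Qed.

Definition eM (v : vtx) : 'M[K]_20 := C_mx (CV v).
Definition xM (a : carr) : 'M[K]_20 := C_mx (CA a).

Lemma C_mxw_seq1 g : C_mx g = C_mxw [:: g].
Proof. by rewrite /C_mxw big_seq1. Qed.

Lemma model_kq_data : kq_data C_src C_tgt eM xM.
Proof.
split.
- move=> v w; rewrite /eM !C_mxw_seq1 /C_mxw -big_cat -/(C_mxw _) -(inj_eq vtx_num_inj).
  by case: v; case: w => /=; (apply: C_mxw_eq1 || apply: C_mxw_eq0); vm_compute.
- apply: (mono_mx_ext (lam := lam)) => i Hi; rewrite mulmx1 mulmx_sumr.
  have Hst : mstate_ok 19 (Some (i, 0)) by [].
  under eq_bigr => v _ do rewrite /eM /C_mx (state_row_mul lam0 (C_table_ok _) Hst).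
  rewrite (bigD1 (ptgt C_tgt (C_path i))) //= big1 ?addr0; first by rewrite Hi eqxx.
  by move=> v Hv; rewrite (inj_eq vtx_num_inj) eq_sym (negPf Hv) andbF.
- move=> a; rewrite /eM /xM !C_mxw_seq1 /C_mxw -!big_cat /=.
  by case: a; apply: C_mxw_eq1; vm_compute.
Qed.

Lemma prod_xM w : \prod_(a <- w) xM a = C_mxw (map CA w).
Proof. by rewrite /C_mxw big_map. Qed.

Lemma model_rels r : r \in C_rels lam -> kq_valid C_src C_tgt r /\ keval eM xM r = 0.
Proof.
rewrite !inE => /orP[] /eqP ->; split;
  rewrite /kq_valid /is_qpath /= -?(inj_eq vtx_num_inj) // keval_binomial // !prod_xM /=.
  rewrite (@C_mxw_eq1 [:: CA c_delta; CA c_alpha; CA c_beta] [:: CA c_delta; CA c_rho; CA c_omega]).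
    by rewrite scaleN1r subrr.
  by vm_compute.
rewrite (@C_mxw_eq [:: CA c_sigma; CA c_rho; CA c_omega] [:: CA c_sigma; CA c_alpha; CA c_beta] 1).
  by rewrite expr1z scaleNr subrr.
by vm_compute.
Qed.

End CModel.

(** * Symbolic computation in T(C(λ)) *)

Definition C_path_word (i : nat) : seq cletter :=
  if (C_path i).2 is [::] then [:: CV (C_path i).1] else map CA (C_path i).2.

Definition C_exps (j : nat) (w : seq cletter) : seq int :=
  flatten [seq if mrun (map C_table w) (Some (i, 0)) is Some (j', k) then
                 (if j' == j then [:: k] else [::]) else [::] | i <- iota 0 6].

Lemma C_exps_basis : all (fun j => all (fun k =>
  C_exps j (C_path_word k) == if j == k then [:: 0] else [::]) (iota 0 20)) (iota 0 20).
Proof. by vm_compute. Qed.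

(* [TL g] is a generator of C(λ) and [TD j k] is λ^k times the functional dual
   to the j-th basis path.  A product of letters is a C-word, λ^k w1 D_j w2,
   or 0, as products of two duals vanish; [tnf_exps f m] lists the exponents
   e such that the m-th coordinate of [f] is the sum of the λ^e. *)
Inductive tletter := TL of cletter | TD of nat & int.

Inductive tnf := NC of seq cletter | ND of nat & int & seq cletter & seq cletter | N0.

Fixpoint tnormal (ls : seq tletter) : tnf :=
  match ls with
  | [::] => NC [::]
  | TL g :: ls' =>
      match tnormal ls' with
      | NC w => NC (g :: w) | ND j k w1 w2 => ND j k (g :: w1) w2 | N0 => N0 end
  | TD j k :: ls' => if tnormal ls' is NC w then ND j k [::] w else N0
  end.

Definition tnf_ok (f : tnf) : bool := if f is ND j _ _ _ then (j < 20)%N else true.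

Definition tnf_exps (f : tnf) (m : nat) : seq int :=
  match f with
  | NC w => if (m < 20)%N then C_exps m w else [::]
  | ND j k w1 w2 =>
      if (m < 20)%N then [::]
      else map (fun e => e + k) (C_exps j (w2 ++ C_path_word (m - 20) ++ w1))
  | N0 => [::]
  end.

Definition tnf_eqb (f1 f2 : tnf) (k : int) : bool :=
  [&& tnf_ok f1, tnf_ok f2 &
      all (fun m => perm_eq (tnf_exps f1 m) (map (fun e => e + k) (tnf_exps f2 m))) (iota 0 40)].

Definition tnf_eqb0 (f : tnf) : bool :=
  tnf_ok f && all (fun m => tnf_exps f m == [::]) (iota 0 40).

Definition tnf_eqb2 (f f1 f2 : tnf) (k1 k2 : int) : bool :=
  [&& tnf_ok f, tnf_ok f1, tnf_ok f2 &
      all (fun m => perm_eq (tnf_exps f m)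
        (map (fun e => e + k1) (tnf_exps f1 m) ++ map (fun e => e + k2) (tnf_exps f2 m)))
        (iota 0 40)].

Definition S_letters (a : sarr) : seq tletter :=
  match a with
  | s_alpha => [:: TL (CA c_alpha)] | s_beta => [:: TL (CA c_beta)]
  | s_rho => [:: TL (CA c_rho)] | s_omega => [:: TL (CA c_omega)]
  | s_delta => [:: TL (CA c_delta)] | s_sigma => [:: TL (CA c_sigma)]
  | s_gamma => [:: TD 19 0] | s_nu => [:: TD 18 1]
  | s_eta => [:: TL (CA c_delta); TL (CA c_alpha)]
  | s_xi => [:: TL (CA c_beta); TD 18 1]
  | s_mu => [:: TL (CA c_sigma); TL (CA c_rho)]
  | s_eps => [:: TL (CA c_omega); TD 19 0]
  end.

Definition S_word_letters (w : seq sarr) : seq tletter := flatten (map S_letters w).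

Definition S_path_letters (p : qpath vtx sarr) : seq tletter :=
  if p.2 is [::] then [:: TL (CV p.1)] else S_word_letters p.2.

Lemma S_letters_idem a :
  tnf_eqb (tnormal ([:: TL (CV (S_src a))] ++ S_letters a ++ [:: TL (CV (S_tgt a))]))
    (tnormal (S_letters a)) 0.
Proof. by case: a; vm_compute. Qed.

Lemma S_letters_binomial a :
  tnf_eqb (tnormal (S_word_letters [:: a; S_f a])) (tnormal (S_word_letters (S_Apath (S_bar a))))
    (S_param_exp (S_bar a)).
Proof. by case: a; vm_compute. Qed.

Lemma S_letters_zero_f a : S_norb (S_f (S_f a)) != 2 ->
  tnf_eqb0 (tnormal (S_word_letters [:: a; S_f a; S_g (S_f a)])).
Proof. by case: a; vm_compute. Qed.

Lemma S_letters_zero_g a : S_norb (S_f a) != 2 ->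
  tnf_eqb0 (tnormal (S_word_letters [:: a; S_g a; S_f (S_g a)])).
Proof. by case: a; vm_compute. Qed.

Definition T_basis_nf (m : nat) : tnf :=
  if (m < 20)%N then NC (C_path_word m) else ND (m - 20) 0 [::] [::].

Lemma T_basis_exps : all (fun m => tnf_ok (T_basis_nf m) && all (fun m' =>
  perm_eq (tnf_exps (T_basis_nf m) m') (if m' == m then [:: 0] else [::])) (iota 0 40))
  (iota 0 40).
Proof. by vm_compute. Qed.

Definition S_elt_letters (m : nat) : seq tletter := S_path_letters (nth (v1, [::]) S_basis m).

Lemma S_basis_images : all (fun m => (m == 32%N) || (m == 33%N) ||
  has (tnf_eqb (tnormal (S_elt_letters m)) (T_basis_nf m)) [:: 0; 1]) (iota 0 40).
Proof. by vm_compute. Qed.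

Lemma S_basis_image32 :
  tnf_eqb2 (tnormal (S_elt_letters 32)) (T_basis_nf 32) (T_basis_nf 33) 0 1.
Proof. by vm_compute. Qed.

Lemma S_basis_image33 :
  tnf_eqb2 (tnormal (S_elt_letters 33)) (T_basis_nf 32) (T_basis_nf 33) 1 1.
Proof. by vm_compute. Qed.

Lemma S_basis_valid : all (is_qpath S_src S_tgt) S_basis.
Proof. by rewrite /= /is_qpath /= -!(inj_eq vtx_num_inj). Qed.

Definition S_elt_exp (m : nat) : int :=
  if tnf_eqb (tnormal (S_elt_letters m)) (T_basis_nf m) 0 then 0 else 1.

Lemma S_elt_expP m : (m < 40)%N -> m != 32%N -> m != 33%N ->
  tnf_eqb (tnormal (S_elt_letters m)) (T_basis_nf m) (S_elt_exp m).
Proof.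
move=> Hm H32 H33; have /allP/(_ m) := S_basis_images; rewrite mem_iota => /(_ Hm).
by rewrite (negPf H32) (negPf H33) /= orbF /S_elt_exp; case: ifP.
Qed.

Section SPresented.
Variables (K : fieldType) (lam : K) (S : algType K) (eS : vtx -> S) (xS : sarr -> S).
Hypotheses (lam0 : lam != 0) (exS : kq_data S_src S_tgt eS xS)
  (eS_onto : forall b, exists f, kq_valid S_src S_tgt f /\ keval eS xS f = b)
  (eS_ker : forall f, kq_valid S_src S_tgt f ->
     keval eS xS f = 0 <-> in_ideal S_src S_tgt (S_rels lam) f).

Local Notation xcode := (code_eval sarr_num xS).

Lemma S_rules_sound rl : rl \in S_rules ->
  \prod_(n <- rl.1.1) xcode n = lam ^ rl.1.2 *: \prod_(n <- rl.2) xcode n.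
Proof.
case/mapP=> a _ ->; cbn [fst snd]; rewrite !(code_eval_word sarr_num_inj).
have := presented_binomial eS_ker (wsa_rels_binomial S_src S_f S_weight (S_param lam) a).
rewrite S_barE S_gpermE S_norbE /S_weight mul1n S_paramE mulr1 opprK; apply;
  by case: a; rewrite /kq_valid /kq_homog /is_qpath /ptgt /psrc /= -?(inj_eq vtx_num_inj).
Qed.

Lemma S_zeros_sound z : z \in S_zeros -> \prod_(n <- z) xcode n = 0.
Proof.
rewrite mem_cat => /orP[] /mapP[a]; rewrite mem_filter => /andP[Hv _] ->;
  rewrite (code_eval_word sarr_num_inj); apply: (presented_monomial eS_ker (v := S_src a)) => //.
- by rewrite -S_gpermE wsa_rels_zero_f ?S_virtualE.
- by case: a {Hv}; rewrite /is_qpath /= -?(inj_eq vtx_num_inj).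
- by rewrite -S_gpermE wsa_rels_zero_g ?S_virtualE.
- by case: a {Hv}; rewrite /is_qpath /= -?(inj_eq vtx_num_inj).
Qed.

Definition S_elt (i : nat) : S := peval eS xS (nth (v1, [::]) S_basis i).

Lemma S_span u : in_span 40 S_elt u.
Proof.
apply: (presentation_span exS eS_onto (v1, [::]) (ps := S_basis)).
  by case; rewrite -(mem_map (qpath_code_inj vtx_num_inj sarr_num_inj)).
exact: (rw_closed_mul sarr_num_inj exS lam0 S_rules_sound S_zeros_sound S_basis_closed).
Qed.

End SPresented.

Section CPresented.
Variables (K : fieldType) (lam : K) (C : algType K) (eC : vtx -> C) (xC : carr -> C).
Hypotheses (lam0 : lam != 0) (exC : kq_data C_src C_tgt eC xC)
  (eC_onto : forall b, exists f, kq_valid C_src C_tgt f /\ keval eC xC f = b)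
  (eC_ker : forall f, kq_valid C_src C_tgt f ->
     keval eC xC f = 0 <-> in_ideal C_src C_tgt (C_rels lam) f).
Variable psiC : {lrmorphism C -> 'M[K]_20}.
Hypothesis psiC_keval : forall f, kq_valid C_src C_tgt f ->
  psiC (keval eC xC f) = keval (eM lam) (xM lam) f.

Definition C_letter (g : cletter) : C := match g with CV v => eC v | CA a => xC a end.
Definition C_word (w : seq cletter) : C := \prod_(g <- w) C_letter g.
Definition C_elt (i : nat) : C := peval eC xC (C_path i).

Lemma C_word_cat w1 w2 : C_word (w1 ++ w2) = C_word w1 * C_word w2.
Proof. exact: big_cat. Qed.

Lemma C_eltE i : C_elt i = C_word (C_path_word i).
Proof.
rewrite /C_elt /C_path_word /C_word; case: (C_path i) => v [|a w] /=.
  by rewrite big_seq1.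
by rewrite -map_cons big_map.
Qed.

Lemma psiC_word w : psiC (C_word w) = C_mxw lam w.
Proof.
rewrite rmorph_prod; apply: eq_bigr => -[v|a] _ /=.
  have := psiC_keval (f := kpath K (v, [::])); rewrite !keval_kpath; apply.
  by rewrite /kq_valid /= /is_qpath.
have := psiC_keval (f := kpath K (C_src a, [:: a])); rewrite !keval_kpath /peval /= !big_seq1.
by apply; rewrite /kq_valid /= /is_qpath /= eqxx.
Qed.

(* The coordinate row of 1 = Σ_v e_v, so [C_coord j u] is the j-th coordinate
   of u in the basis [C_elt]. *)
Definition C_unit_row : 'rV[K]_20 := \sum_(i < 6) state_row lam 19 (Some (nat_of_ord i, 0)).
Definition C_coord (j : nat) (u : C) : K := (C_unit_row *m psiC u) 0 (inord j).

Lemma C_coord_lin j : lin_functional (C_coord j).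
Proof. by move=> k u v; rewrite /C_coord linearP mulmxDr -scalemxAr !mxE. Qed.

Lemma C_coord_word j w : (j < 20)%N -> C_coord j (C_word w) = \sum_(k <- C_exps j w) lam ^ k.
Proof.
move=> Hj; rewrite /C_coord psiC_word /C_unit_row mulmx_suml summxE /C_exps.
rewrite big_flatten big_map -[iota 0 6]/(index_iota 0 6) big_mkord; apply: eq_bigr => i _.
have Hi : mstate_ok 19 (Some (nat_of_ord i, 0)) by rewrite /= (ltn_trans (ltn_ord i)).
rewrite /C_mxw -(big_map C_table predT) (state_row_prod lam0 (C_tables_ok w) Hi).
have := mrun_ok (C_tables_ok w) Hi; case: mrun => [[j' k]|] /= Hj'; last by rewrite mxE big_nil.
rewrite !mxE /= (_ : (inord j == inord j' :> 'I_20) = (j' == j)); last first.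
  by apply/eqP/eqP => [/(congr1 val)|->] //=; rewrite !inordK.
by case: eqP => _; rewrite ?big_seq1 ?big_nil ?mulr1 ?mulr0.
Qed.

Lemma C_coord_elt j k : (j < 20)%N -> (k < 20)%N -> C_coord j (C_elt k) = (j == k)%:R.
Proof.
move=> Hj Hk; rewrite C_eltE C_coord_word //.
have /allP/(_ j) := C_exps_basis; rewrite mem_iota => /(_ Hj) /allP /(_ k).
by rewrite mem_iota => /(_ Hk) /eqP ->; case: (j == k); rewrite ?big_seq1 ?big_nil.
Qed.

Local Notation xcode := (code_eval carr_num xC).

Lemma C_rules_sound rl : rl \in C_rules ->
  \prod_(n <- rl.1.1) xcode n = lam ^ rl.1.2 *: \prod_(n <- rl.2) xcode n.
Proof.
rewrite !inE => /orP[] /eqP ->; cbn [fst snd]; rewrite !(code_eval_word carr_num_inj).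
  have := presented_binomial eC_ker (v := v5) (v' := v5) (c := -1)
    (w := [:: c_delta; c_alpha; c_beta]) (w' := [:: c_delta; c_rho; c_omega]).
  rewrite opprK expr0z; apply; rewrite ?mem_head //;
  by rewrite /kq_valid /kq_homog /is_qpath /ptgt /psrc /= -?(inj_eq vtx_num_inj).
have := presented_binomial eC_ker (v := v4) (v' := v4) (c := - lam)
  (w := [:: c_sigma; c_rho; c_omega]) (w' := [:: c_sigma; c_alpha; c_beta]).
rewrite opprK; apply; rewrite ?inE ?eqxx ?orbT //;
by rewrite /kq_valid /kq_homog /is_qpath /ptgt /psrc /= -?(inj_eq vtx_num_inj).
Qed.

Lemma C_span u : in_span 20 C_elt u.
Proof.
apply: (presentation_span exC eC_onto (v1, [::]) (ps := C_basis)).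
  by case; rewrite -(mem_map (qpath_code_inj vtx_num_inj carr_num_inj)).
exact: (rw_closed_mul carr_num_inj exC lam0 C_rules_sound (zeros := [::]) _ C_basis_closed).
Qed.

Lemma C_decomp u : u = \sum_(k < 20) C_coord k u *: C_elt k.
Proof.
have [c Ec] := C_span u; rewrite {1}Ec; apply: eq_bigr => k _; congr (_ *: _).
rewrite Ec (lin_functional_sum (C_coord_lin k)) (bigD1 k) //= big1 ?addr0.
  by rewrite (lin_functionalZ (C_coord_lin k)) C_coord_elt // eqxx mulr1.
move=> i /eqP Hik; rewrite (lin_functionalZ (C_coord_lin k)) C_coord_elt //.
by rewrite (_ : (k == i :> nat) = false) ?mulr0 //; apply/eqP => /val_inj /esym.
Qed.

Local Notation T := (triv_ext C).

Lemma te_dual_lin j w1 w2 : lin_functional (fun u => C_coord j (C_word w2 * u * C_word w1)).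
Proof.
by move=> k u v; rewrite mulrDr mulrDl -scalerAr -scalerAl C_coord_lin.
Qed.

Definition te_dual j w1 w2 : T := te_build 0 (te_dual_lin j w1 w2).

Definition T_letter (l : tletter) : T :=
  match l with TL g => te_embed (C_letter g) | TD j k => lam ^ k *: te_dual j [::] [::] end.
Definition T_word (ls : seq tletter) : T := \prod_(l <- ls) T_letter l.

Definition tnf_val (f : tnf) : T :=
  match f with
  | NC w => te_embed (C_word w) | ND j k w1 w2 => lam ^ k *: te_dual j w1 w2 | N0 => 0
  end.

Lemma T_word_cat l1 l2 : T_word (l1 ++ l2) = T_word l1 * T_word l2.
Proof. exact: big_cat. Qed.

Lemma te_embed_dual g k j w1 w2 :
  te_embed (C_letter g) * (lam ^ k *: te_dual j w1 w2) = lam ^ k *: te_dual j (g :: w1) w2.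
Proof.
apply: te_eq => [|u] /=; first by rewrite !scaler0 mulr0.
by rewrite addr0 /C_word big_cons !mulrA.
Qed.

Lemma te_dual_embed j k w :
  (lam ^ k *: te_dual j [::] [::]) * te_embed (C_word w) = lam ^ k *: te_dual j [::] w.
Proof.
apply: te_eq => [|u] /=; first by rewrite scaler0 mul0r.
by rewrite add0r /C_word !big_nil mul1r !mulr1.
Qed.

Lemma te_dual_mul j k j' k' w1 w2 :
  (lam ^ k *: te_dual j [::] [::]) * (lam ^ k' *: te_dual j' w1 w2) = 0.
Proof.
apply: te_eq => [|u] /=; first by rewrite scaler0 mul0r.
have dual0 i w w' : C_coord i (C_word w' * 0 * C_word w) = 0.
  by rewrite mulr0 mul0r (lin_functional0 (C_coord_lin i)).
by rewrite !scaler0 mulr0 mul0r !dual0 !mulr0 addr0.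
Qed.

Lemma T_word_normal ls : T_word ls = tnf_val (tnormal ls).
Proof.
elim: ls => [|l ls IH]; first by rewrite /T_word big_nil /= /C_word big_nil.
rewrite /T_word big_cons -/(T_word ls) IH.
case: l => [g|j k] /=; case: (tnormal ls) => [w|j' k' w1 w2|] /=; rewrite ?mulr0 //.
- by rewrite te_embedM /C_word big_cons.
- exact: te_embed_dual.
- exact: te_dual_embed.
- exact: te_dual_mul.
Qed.

Definition te_coord (m : nat) (t : T) : K :=
  if (m < 20)%N then C_coord m (te_val t).1 else (te_val t).2 (C_elt (m - 20)).

Lemma te_coord_lin m k t t' : te_coord m (k *: t + t') = k * te_coord m t + te_coord m t'.
Proof. by rewrite /te_coord; case: ifP => _ //=; rewrite C_coord_lin. Qed.

Lemma te_coord0 m : te_coord m 0 = 0.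
Proof. by rewrite /te_coord; case: ifP => _ //=; rewrite (lin_functional0 (C_coord_lin m)). Qed.

Lemma te_coordD m t t' : te_coord m (t + t') = te_coord m t + te_coord m t'.
Proof. by have := te_coord_lin m 1 t t'; rewrite scale1r mul1r. Qed.

Lemma te_coordZ m k t : te_coord m (k *: t) = k * te_coord m t.
Proof. by have := te_coord_lin m k t 0; rewrite !addr0 te_coord0 addr0. Qed.

Lemma te_coord_sum m (I : Type) (r : seq I) (P : pred I) (F : I -> T) :
  te_coord m (\sum_(i <- r | P i) F i) = \sum_(i <- r | P i) te_coord m (F i).
Proof. exact: (big_morph (te_coord m) (te_coordD m) (te_coord0 m)). Qed.

Lemma te_coord_ext (t t' : T) : (forall m, (m < 40)%N -> te_coord m t = te_coord m t') -> t = t'.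
Proof.
move=> Ett'; apply: te_eq => [|u].
  rewrite (C_decomp (te_val t).1) (C_decomp (te_val t').1); apply: eq_bigr => k _.
  by have := Ett' k (@ltn_trans 20 k 40 (ltn_ord k) isT); rewrite /te_coord ltn_ord => ->.
rewrite (C_decomp u) !(lin_functional_sum (te_lin _)); apply: eq_bigr => k _.
rewrite !(lin_functionalZ (te_lin _)); congr (_ * _).
have := Ett' (k + 20)%N; rewrite /te_coord (_ : (k + 20 < 20)%N = false) ?addnK; last first.
  by rewrite ltnNge leq_addl.
apply; exact: (leq_add (ltn_ord k) (leqnn 20)).
Qed.

Lemma te_coord_tnf f m : tnf_ok f ->
  te_coord m (tnf_val f) = \sum_(e <- tnf_exps f m) lam ^ e.
Proof.
case: f => [w|j k w1 w2|] /= Hf; rewrite /te_coord.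
- by case: ifP => Hm /=; rewrite ?C_coord_word ?big_nil.
- case: ifP => Hm /=; first by rewrite scaler0 (lin_functional0 (C_coord_lin m)) big_nil.
  rewrite C_eltE -!C_word_cat catA C_coord_word // big_map mulr_sumr.
  by apply: eq_bigr => e _; rewrite expfzDr // mulrC.
- by rewrite (lin_functional0 (C_coord_lin _)); case: ifP; rewrite big_nil.
Qed.

Lemma tnf_eqbP f1 f2 k : tnf_eqb f1 f2 k -> tnf_val f1 = lam ^ k *: tnf_val f2.
Proof.
case/and3P=> ok1 ok2 /allP H; apply: te_coord_ext => m Hm.
rewrite te_coordZ !te_coord_tnf // (perm_big _ (H m _)) ?mem_iota // big_map mulr_sumr.
by apply: eq_bigr => e _; rewrite expfzDr // mulrC.
Qed.

Lemma tnf_eqb0P f : tnf_eqb0 f -> tnf_val f = 0.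
Proof.
case/andP=> ok /allP H; apply: te_coord_ext => m Hm.
by rewrite te_coord0 te_coord_tnf // (eqP (H m _)) ?big_nil ?mem_iota.
Qed.

Lemma tnf_eqb2P f f1 f2 k1 k2 : tnf_eqb2 f f1 f2 k1 k2 ->
  tnf_val f = lam ^ k1 *: tnf_val f1 + lam ^ k2 *: tnf_val f2.
Proof.
case/and4P=> ok ok1 ok2 /allP H; apply: te_coord_ext => m Hm.
rewrite te_coordD !te_coordZ !te_coord_tnf // (perm_big _ (H m _)) ?mem_iota //.
rewrite big_cat !big_map !mulr_sumr.
by congr (_ + _); apply: eq_bigr => e _; rewrite expfzDr // mulrC.
Qed.

Definition eT (v : vtx) : T := te_embed (eC v).
Definition xT (a : sarr) : T := T_word (S_letters a).

Lemma T_word_tnf l1 l2 k : tnf_eqb (tnormal l1) (tnormal l2) k -> T_word l1 = lam ^ k *: T_word l2.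
Proof. by rewrite !T_word_normal; apply: tnf_eqbP. Qed.

Lemma prod_xT w : \prod_(a <- w) xT a = T_word (S_word_letters w).
Proof.
elim: w => [|a w IH]; first by rewrite big_nil /T_word big_nil.
by rewrite big_cons IH /S_word_letters /= T_word_cat.
Qed.

Lemma peval_eT p : peval eT xT p = T_word (S_path_letters p).
Proof. by case: p => v [|a w]; rewrite /peval /= ?prod_xT // /T_word big_seq1. Qed.

Lemma T_kq_data : kq_data S_src S_tgt eT xT.
Proof.
split.
- by move=> v w; rewrite /eT te_embedM (idem_mul exC); case: eqP; rewrite ?te_embed0.
- by rewrite /eT -te_embed_sum; case: exC => _ -> _.
- move=> a; have E := T_word_tnf (S_letters_idem a); rewrite expr0z scale1r in E.
  by rewrite /xT -{1}E !T_word_cat mulrA /T_word !big_seq1.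
Qed.

Lemma T_rels r : r \in S_rels lam -> kq_valid S_src S_tgt r /\ keval eT xT r = 0.
Proof.
have T_zero w : tnf_eqb0 (tnormal (S_word_letters w)) -> \prod_(a <- w) xT a = 0.
  by rewrite prod_xT T_word_normal; apply: tnf_eqb0P.
case/wsa_relsP=> a [->|[Hv ->]|[Hv ->]]; split.
- by rewrite S_barE /Apath S_gpermE S_norbE /S_weight; case: a;
    rewrite /kq_valid /is_qpath /= -?(inj_eq vtx_num_inj).
- rewrite S_barE /Apath S_gpermE S_norbE /S_weight mul1n -/(S_Apath _) /=.
  rewrite keval_binomial //; last by case: a.
  by rewrite !prod_xT (T_word_tnf (S_letters_binomial a)) S_paramE mulr1 scaleNr subrr.
- by rewrite S_gpermE; case: a {Hv}; rewrite /kq_valid /is_qpath /= -?(inj_eq vtx_num_inj).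
- by rewrite S_gpermE keval_kpath /peval /= T_zero // S_letters_zero_f // -S_virtualE.
- by rewrite S_gpermE; case: a {Hv}; rewrite /kq_valid /is_qpath /= -?(inj_eq vtx_num_inj).
- by rewrite S_gpermE keval_kpath /peval /= T_zero // S_letters_zero_g // -S_virtualE.
Qed.

(** * The isomorphism *)

Section Isomorphism.
Hypothesis lam1 : lam != 1.
Variables (S : algType K) (eS : vtx -> S) (xS : sarr -> S).
Hypotheses (exS : kq_data S_src S_tgt eS xS)
  (eS_onto : forall b, exists f, kq_valid S_src S_tgt f /\ keval eS xS f = b)
  (eS_ker : forall f, kq_valid S_src S_tgt f ->
     keval eS xS f = 0 <-> in_ideal S_src S_tgt (S_rels lam) f).
Variable psi : {lrmorphism S -> T}.
Hypothesis psi_keval : forall f, kq_valid S_src S_tgt f ->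
  psi (keval eS xS f) = keval eT xT f.

Local Notation S_elt := (S_elt eS xS).

Definition T_basis (m : nat) : T := tnf_val (T_basis_nf m).

Lemma te_coord_basis m' m : (m' < 40)%N -> (m < 40)%N -> te_coord m' (T_basis m) = (m' == m)%:R.
Proof.
move=> Hm' Hm; have /allP/(_ m) := T_basis_exps; rewrite mem_iota => /(_ Hm) /andP[ok /allP].
move=> /(_ m'); rewrite mem_iota => /(_ Hm') Hexps.
by rewrite /T_basis te_coord_tnf // (perm_big _ Hexps); case: (m' == m); rewrite ?big_seq1 ?big_nil.
Qed.

Lemma T_span t : in_span 40 T_basis t.
Proof.
exists (fun m => te_coord m t); apply: te_coord_ext => m' Hm'.
rewrite te_coord_sum (bigD1 (Ordinal Hm')) //= big1 ?addr0.
  by rewrite te_coordZ te_coord_basis // eqxx mulr1.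
move=> i /eqP Hi; rewrite te_coordZ te_coord_basis // (_ : (m' == i) = false) ?mulr0 //.
by apply/eqP => Ei; apply: Hi; apply: val_inj.
Qed.

Lemma T_basis_free (c : nat -> K) : \sum_(i < 40) c i *: T_basis i = 0 ->
  forall i, (i < 40)%N -> c i = 0.
Proof.
move=> Hc i Hi; have := congr1 (te_coord i) Hc; rewrite te_coord0 te_coord_sum.
rewrite (bigD1 (Ordinal Hi)) //= big1 ?addr0.
  by rewrite te_coordZ te_coord_basis // eqxx mulr1.
move=> j /eqP Hj; rewrite te_coordZ te_coord_basis // (_ : (i == j) = false) ?mulr0 //.
by apply/eqP => Ej; apply: Hj; apply: val_inj.
Qed.

Lemma psi_S_elt m : (m < 40)%N -> psi (S_elt m) = T_word (S_elt_letters m).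
Proof.
move=> Hm; rewrite /S_elt -keval_kpath psi_keval; last first.
  by rewrite /kq_valid /= andbT (allP S_basis_valid) // mem_nth.
by rewrite keval_kpath peval_eT.
Qed.

(* The images of [S_elt 32] and [S_elt 33] are T_basis 32 + λ T_basis 33 and
   λ T_basis 32 + λ T_basis 33; these combinations diagonalise the block. *)
Definition S_adapted (m : nat) : S :=
  if m == 32%N then S_elt 32 - S_elt 33
  else if m == 33%N then S_elt 33 - lam *: S_elt 32 else S_elt m.

Definition S_adapted_scale (m : nat) : K :=
  if m == 32%N then 1 - lam
  else if m == 33%N then lam * (1 - lam) else lam ^ S_elt_exp m.

Lemma psi_S_adapted m : (m < 40)%N -> psi (S_adapted m) = S_adapted_scale m *: T_basis m.
Proof.
have E32 : psi (S_elt 32) = T_basis 32 + lam *: T_basis 33.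
  rewrite psi_S_elt // T_word_normal (tnf_eqb2P S_basis_image32).
  by rewrite expr0z expr1z scale1r.
have E33 : psi (S_elt 33) = lam *: T_basis 32 + lam *: T_basis 33.
  by rewrite psi_S_elt // T_word_normal (tnf_eqb2P S_basis_image33) expr1z.
move=> Hm; rewrite /S_adapted /S_adapted_scale; case: eqP => [->|/eqP H32].
  by rewrite linearB /= E32 E33 opprD addrACA subrr addr0 scalerBl scale1r.
case: eqP => [->|/eqP H33].
  rewrite linearB linearZ_LR /= E32 E33 scalerDr opprD addrACA subrr add0r.
  by rewrite [lam *: (lam *: _)]scalerA -scalerBl mulrBr mulr1.
rewrite psi_S_elt // T_word_normal; exact: (tnf_eqbP (S_elt_expP Hm H32 H33)).
Qed.

Lemma S_adapted_scale_neq0 m : (m < 40)%N -> S_adapted_scale m != 0.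
Proof.
have lam1' : 1 - lam != 0 by rewrite subr_eq0 eq_sym.
move=> _; rewrite /S_adapted_scale; case: (m == 32%N) => //.
by case: (m == 33%N); rewrite ?mulf_neq0 ?expfz_neq0.
Qed.

Lemma S_adapted_span u : in_span 40 S_adapted u.
Proof.
have lam1' : 1 - lam != 0 by rewrite subr_eq0 eq_sym.
apply: (in_span_trans (S_span lam0 exS eS_onto eS_ker)) => i Hi.
have unscale x y : (1 - lam) *: x = y -> x = (1 - lam)^-1 *: y.
  by move=> <-; rewrite scalerA mulVf // scale1r.
have gen32 : S_elt 32 = (1 - lam)^-1 *: (S_adapted 32 + S_adapted 33).
  by apply: unscale; rewrite /S_adapted /= scalerBl scale1r addrA subrK.
have gen33 : S_elt 33 = (1 - lam)^-1 *: (lam *: S_adapted 32 + S_adapted 33).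
  by apply: unscale; rewrite /S_adapted /= scalerBl scale1r scalerBr [RHS]addrC addrA subrK.
case: (eqVneq i 32%N) => [->|H32].
  by rewrite gen32; apply: in_spanZ; apply: in_spanD; apply: in_span_elt.
case: (eqVneq i 33%N) => [->|H33].
  rewrite gen33; apply: in_spanZ; apply: in_spanD; last exact: in_span_elt.
  by apply: in_spanZ; apply: in_span_elt.
rewrite (_ : S_elt i = S_adapted i); first exact: in_span_elt.
by rewrite /S_adapted (negPf H32) (negPf H33).
Qed.

Lemma S_iso : iso_trivial_ext S C.
Proof.
have psi_inj := basis_image_inj S_adapted_span T_basis_free psi_S_adapted S_adapted_scale_neq0.
have psi_onto := basis_image_onto T_span psi_S_adapted S_adapted_scale_neq0.
exists (fun u => te_val (psi u)); split.
- by move=> k u v; rewrite linearP.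
- by split=> [u v /val_inj /psi_inj|u]; last exact: te_lin.
- move=> p Hp; have [u Eu] := psi_onto (te_build p.1 Hp); exists u.
  by rewrite Eu; case: p Hp {Eu}.
- by rewrite rmorph1.
- by move=> u v; rewrite rmorphM.
Qed.

End Isomorphism.

End CPresented.

Theorem lemma3p7 (K : closedFieldType) (lam : K) :
  lam != 0 -> lam != 1 ->
  forall S C : algType K,
    presents S_src S_tgt (S_rels lam) S ->
    presents C_src C_tgt (C_rels lam) C ->
    iso_trivial_ext S C.
Proof.
move=> lam0 lam1 S C [eS [xS [eS1 eS2 eS3 eS_onto eS_ker]]] [eC [xC [eC1 eC2 eC3 eC_onto eC_ker]]].
have exS : kq_data S_src S_tgt eS xS by split.
have exC : kq_data C_src C_tgt eC xC by split.
have [psiC psiC_keval] :=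
  presentation_lift exC eC_onto eC_ker (model_kq_data lam0) (model_rels lam0).
have [psi psi_keval] := presentation_lift exS eS_onto eS_ker
  (T_kq_data lam0 exC eC_onto eC_ker psiC_keval) (T_rels lam0 exC eC_onto eC_ker psiC_keval).
exact: (S_iso lam0 exC eC_onto eC_ker psiC_keval lam1 exS eS_onto eS_ker psi_keval).
Qed.
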